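(* The forcing $\tilde{\mathbb E}$, with the functions $\operatorname{stem}$ and $\operatorname{loss}$ (defined on $Q'=\operatorname{dom}(\operatorname{loss})$), has strong FAM-limits for intervals: for every FAM $\Xi$ there is a function $\lim_\Xi:\tilde{\mathbb E}^\omega\to\tilde{\mathbb E}$ which is a strong FAM limit for intervals.
   Context: Fix an interval partition $(I_k)_{k\in\omega}$ of $\omega$ into finite intervals with $|I_k|\to\infty$. A partial FAM is a finitely additive probability measure on a Boolean subalgebra of $\mathcal P(\omega)$ containing all singletons and assigning them measure $0$; a FAM is a partial FAM with domain $\mathcal P(\omega)$. $T^*$, $\Omega_s$, $\mu_s$: defined by induction on height $h\ge0$: $T^*\cap\omega^0=\{\langle\rangle\}$; $\rho(h)=\max(|T^*\cap\omega^h|,h+2)$, $\pi(h)=((h+1)^2\rho(h)^{h+1})^{\rho(h)^h}$, $a(h)=\pi(h)^{h+2}$, $M(h)=a(h)^2$; each $s\in T^*\cap\omega^h$ has successor set $\Omega_s=\{s^\frown\ell:\ell<M(h)\}$; $\mu_s(A)=\log_{a(h)}\big(\frac{M(h)}{M(h)-|A|}\big)$ for $A\subsetneq\Omega_s$ and $\mu_s(\Omega_s)=\infty$. For a subtree $p\subseteq T^*$ and $s\in p$, $\mu_s(p)=\mu_s(p\cap\Omega_s)$; the stem of $p$ is its shortest splitting node. $\tilde{\mathbb E}$ consists of subtrees $p\subseteq T^*$ with stem of height $h^*$ such that $\mu_t(p)\ge1+\frac1{h^*}$ for all $t\in p$ extending the stem, ordered by inclusion. $\operatorname{stem}(p)$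 is the stem; $\operatorname{loss}(p)$ is defined iff there is an integer $m\ge2$ with stem height $h^*>3m$ and $\mu_s(p)\ge1+\frac1m$ for all $s\in p$ of height $\ge h^*$, and then $\operatorname{loss}(p)=\frac1m$ for the maximal such $m$. For a pair $(s^*,l^* )$, an $(s^*,l^* )$-sequence is a sequence $(q_\ell)_{\ell\in\omega}$ of conditions with $\operatorname{stem}(q_\ell)=s^*$ and $\operatorname{loss}(q_\ell)=l^*$ for all $\ell$. Given a FAM $\Xi$, a function $\lim_\Xi$ from sequences of conditions to conditions is a strong FAM limit for intervals if: for every pair $(s^*,l^* )$, every $j^*\in\omega$ and $(s^*,l^* )$-sequences $\bar q^j$ ($j<j^*$), every $\epsilon>0$, $k^*\in\omega$, every finite partition $(B_m)_{m<m^*}$ of $\omega$, and every condition $q$ stronger than all $\lim_\Xi(\bar q^j)$ ($j<j^*$), there are a nonempty finite $u\subseteq\omega\setminus k^*$ and a condition $q'\le q$ such that $\Xi(B_m)-\epsilon<\frac{|u\cap B_m|}{|u|}<\Xi(B_m)+\epsilon$ for all $m<m^*$, and $\frac1{|u|}\sum_{k\in u}\frac{|\{\ell\in I_k:\ q'\le q^j_\ell\}|}{|I_k|}\ge1-l^*-\epsilon$ for all $j<j^*$. *)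

From Stdlib Require Import Reals Lra Lia Arith List ClassicalEpsilon.
Import ListNotations.
Open Scope R_scope.

(* Given c = |T* ∩ ω^h| and h, compute rho(h), pi(h), a(h), M(h). *)
Definition rho_of (c h : nat) : nat := Nat.max c (h + 2).
Definition pi_of (c h : nat) : nat :=
  Nat.pow ((h + 1) * (h + 1) * Nat.pow (rho_of c h) (h + 1))
          (Nat.pow (rho_of c h) h).
Definition a_of (c h : nat) : nat := Nat.pow (pi_of c h) (h + 2).
Definition M_of (c h : nat) : nat := a_of c h * a_of c h.

(* levcard h = |T* ∩ ω^h|: level 0 is {<>}, and every node of height h has
   exactly M(h) successors. *)
Fixpoint levcard (h : nat) : nat :=
  match h with
  | O => 1
  | S h' => levcard h' * M_of (levcard h') h'
  end.

Definition rho (h : nat) : nat := rho_of (levcard h) h.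
Definition piT (h : nat) : nat := pi_of (levcard h) h.
Definition aT (h : nat) : nat := a_of (levcard h) h.
Definition MT (h : nat) : nat := M_of (levcard h) h.

Definition Tstar (s : list nat) : Prop :=
  forall i, (i < length s)%nat -> (nth i s 0 < MT i)%nat.

Definition pdec (P : Prop) : bool :=
  if excluded_middle_informative P then true else false.

Definition countP (P : nat -> Prop) (lo n : nat) : nat :=
  length (filter (fun i => pdec (P i)) (seq lo n)).

(* extended value: None = +infinity *)
Definition mu (h n : nat) : option R :=
  if Nat.ltb n (MT h)
  then Some (ln (INR (MT h) / INR (MT h - n)) / ln (INR (aT h)))
  else None.

Definition ege (x : option R) (c : R) : Prop :=
  match x with None => True | Some r => c <= r end.

Definition Tree := list nat -> Prop.

Definition subtree (p : Tree) : Prop :=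
  p [] /\ (forall s, p s -> Tstar s) /\
  (forall s t, p (s ++ t) -> p s).

Definition nsucc (p : Tree) (s : list nat) : nat :=
  countP (fun l => p (s ++ [l])) 0 (MT (length s)).

Definition mu_node (p : Tree) (s : list nat) : option R :=
  mu (length s) (nsucc p s).

Definition splitting (p : Tree) (s : list nat) : Prop :=
  exists a b, a <> b /\ p (s ++ [a]) /\ p (s ++ [b]).

Definition is_stem (p : Tree) (s : list nat) : Prop :=
  p s /\ splitting p s /\
  (forall t, p t -> splitting p t -> (length s <= length t)%nat).

Definition prefix (s t : list nat) : Prop := exists r, t = s ++ r.

(* membership in E~ (stem height h* >= 1 so that 1/h* makes sense) *)
Definition inE (p : Tree) : Prop :=
  subtree p /\
  exists st, is_stem p st /\ (1 <= length st)%nat /\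
    forall t, p t -> prefix st t ->
      ege (mu_node p t) (1 + 1 / INR (length st)).

Definition Econd : Type := { p : Tree | inE p }.

Definition Ele (q p : Econd) : Prop :=
  forall s, proj1_sig q s -> proj1_sig p s.

Definition stem_is (q : Econd) (s : list nat) : Prop := is_stem (proj1_sig q) s.

Definition loss_ok (p : Tree) (hstar m : nat) : Prop :=
  (2 <= m)%nat /\ (3 * m < hstar)%nat /\
  forall s, p s -> (hstar <= length s)%nat ->
    ege (mu_node p s) (1 + 1 / INR m).

Definition loss_is (q : Econd) (l : R) : Prop :=
  exists st, stem_is q st /\
  exists m, loss_ok (proj1_sig q) (length st) m /\
    (forall m', loss_ok (proj1_sig q) (length st) m' -> (m' <= m)%nat) /\
    l = 1 / INR m.

(* I_k = [start k, start (k+1)) *)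
Definition interval_partition (start : nat -> nat) : Prop :=
  start 0%nat = 0%nat /\
  (forall k, (start k < start (S k))%nat) /\
  (forall N, exists K, forall k, (K <= k)%nat -> (N <= start (S k) - start k)%nat).

Definition Ilen (start : nat -> nat) (k : nat) : nat := (start (S k) - start k)%nat.

(* subsets of ω are boolean predicates *)
Definition FAM (Xi : (nat -> bool) -> R) : Prop :=
  (forall A, 0 <= Xi A) /\
  Xi (fun _ => true) = 1 /\
  (forall A B, (forall n, andb (A n) (B n) = false) ->
     Xi (fun n => orb (A n) (B n)) = Xi A + Xi B) /\
  (forall k, Xi (fun n => Nat.eqb n k) = 0).

Definition finite_partition (B : nat -> nat -> bool) (mstar : nat) : Prop :=
  (forall n, exists m, (m < mstar)%nat /\ B m n = true) /\
  (forall m1 m2 n, (m1 < mstar)%nat -> (m2 < mstar)%nat ->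
     B m1 n = true -> B m2 n = true -> m1 = m2).

Fixpoint sumR (l : list R) : R :=
  match l with [] => 0 | x :: l' => x + sumR l' end.

Definition strong_FAM_limit (start : nat -> nat) (Xi : (nat -> bool) -> R)
  (lim : (nat -> Econd) -> Econd) : Prop :=
  forall (sstar : list nat) (lstar : R) (jstar : nat)
         (qs : nat -> nat -> Econd),
    (forall j l, (j < jstar)%nat -> stem_is (qs j l) sstar /\ loss_is (qs j l) lstar) ->
  forall (eps : R) (kstar : nat) (B : nat -> nat -> bool) (mstar : nat),
    0 < eps -> finite_partition B mstar ->
  forall q : Econd, (forall j, (j < jstar)%nat -> Ele q (lim (qs j))) ->
  exists (u : list nat) (q' : Econd),
    u <> [] /\ NoDup u /\ (forall k, In k u -> (kstar <= k)%nat) /\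
    Ele q' q /\
    (forall m, (m < mstar)%nat ->
       Xi (B m) - eps < INR (length (filter (B m) u)) / INR (length u) /\
       INR (length (filter (B m) u)) / INR (length u) < Xi (B m) + eps) /\
    (forall j, (j < jstar)%nat ->
       1 / INR (length u) *
       sumR (map (fun k => INR (countP (fun l => Ele q' (qs j l)) (start k) (Ilen start k))
                           / INR (Ilen start k)) u)
       >= 1 - lstar - eps).

(** Fix an (s*, 1/m)-sequence (q_l).  For a node t let density_k(t) be the fraction of the
    l in I_k with t in q_l.  The limit tree keeps the nodes above s* all of whose initial
    segments t0 are good: the k with density_k(t0) >= 1 - slack(t0) form a set of
    Xi-measure at least 1 - slack(t0), where the slack grows with the height from 0 to at
    most 1/(2(|s*|-1)).  Each q_l omits at most a(h)^(1-1/m) successors of a node, so a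
    double-counting argument against Xi shows that a good node has all but
    a(h)^(1-1/|s*|) of its successors good, and the limit tree is a condition.

    Given q below finitely many limits, go up in q to a node t far above s*; t is good
    for every sequence.  Choose a finite sample u beyond k* whose frequencies approximate
    Xi on the partition and on the dense sets of t.  Then walk up in q, each time to a
    successor that barely lowers the average over u of the densities, until a node xH so
    high that the part of q above xH lying in every q^j_l (l below the last interval of u)
    containing xH is still a condition q'.  Its average density over u is at least
    (1 - slack)^2 - eps >= 1 - l* - eps. *)

From Stdlib Require Import Reals Lra Lia List ZArith Bool Classical ClassicalEpsilon FunctionalExtensionality.
Import ListNotations.
Open Scope bool_scope.
Open Scope R_scope.

(* [cap h x] is the number of successors a node of height [h] may miss when its norm
   is at least [1 + x]. *)
Notation missing p t := (MT (length t) - nsucc p t)%nat.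
Notation cap h x := (Rpower (INR (aT h)) (1 - x)).

(** * The parameters of T* and the norm *)

Lemma piT_ge_sq (h : nat) : (1 <= h)%nat -> (4 * (h+1) * (h+1) <= piT h)%nat.
Proof.
  intro Hh. unfold piT, pi_of.
  set (r := rho_of (levcard h) h).
  assert (Hr : (2 <= r)%nat) by (unfold r, rho_of; lia).
  assert (H2 : (2 ^ (h+1) <= r ^ (h+1))%nat) by (apply Nat.pow_le_mono_l; lia).
  assert (H4 : (4 <= 2 ^ (h+1))%nat).
  { replace (h+1)%nat with (S (S (h - 1))) by lia. simpl.
    assert (1 <= 2 ^ (h-1))%nat by (apply Nat.neq_0_lt_0, Nat.pow_nonzero; lia). lia. }
  set (b := ((h + 1) * (h + 1) * r ^ (h + 1))%nat).
  assert (Hb : (4 * (h+1) * (h+1) <= b)%nat) by (unfold b; nia).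
  assert (He : (1 <= r ^ h)%nat) by (apply Nat.neq_0_lt_0, Nat.pow_nonzero; lia).
  assert (b ^ 1 <= b ^ (r ^ h))%nat by (apply Nat.pow_le_mono_r; lia).
  rewrite Nat.pow_1_r in H. lia.
Qed.

Lemma piT_ge2 (h : nat) : (2 <= piT h)%nat.
Proof.
  unfold piT, pi_of.
  set (r := rho_of (levcard h) h).
  assert (Hr : (2 <= r)%nat) by (unfold r, rho_of; lia).
  assert (He : (1 <= r ^ h)%nat) by (apply Nat.neq_0_lt_0, Nat.pow_nonzero; lia).
  set (b := ((h + 1) * (h + 1) * r ^ (h + 1))%nat).
  assert (Hb : (2 <= b)%nat).
  { unfold b. replace (h+1)%nat with (S h) by lia. rewrite Nat.pow_succ_r'. nia. }
  assert (b ^ 1 <= b ^ (r ^ h))%nat by (apply Nat.pow_le_mono_r; lia).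
  rewrite Nat.pow_1_r in H. lia.
Qed.

Lemma aT_ge_pow2 (h : nat) : (2 ^ (h+2) <= aT h)%nat.
Proof. apply Nat.pow_le_mono_l, piT_ge2. Qed.

Lemma aT_ge4 (h : nat) : (4 <= aT h)%nat.
Proof.
  pose proof (aT_ge_pow2 h).
  assert (4 <= 2 ^ (h+2))%nat.
  { rewrite Nat.pow_add_r. assert (1 <= 2 ^ h)%nat by (apply Nat.neq_0_lt_0, Nat.pow_nonzero; lia).
    simpl. lia. }
  lia.
Qed.

Lemma INR_aT_ge4 (h : nat) : 4 <= INR (aT h).
Proof. pose proof (aT_ge4 h) as H. apply le_INR in H. simpl in H. lra. Qed.

Lemma INR_aT_ge_pow2 (h : nat) : 2 ^ (h + 2) <= INR (aT h).
Proof. pose proof (aT_ge_pow2 h) as H. apply le_INR in H. rewrite pow_INR in H. exact H. Qed.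

Lemma INR_MT (h : nat) : INR (MT h) = INR (aT h) * INR (aT h).
Proof. apply mult_INR. Qed.

Lemma cap_le (h : nat) (x y : R) : y <= x -> cap h x <= cap h y.
Proof. intro H. apply Rle_Rpower; [pose proof (INR_aT_ge4 h); lra | lra]. Qed.

Lemma cap_le_aT (h : nat) (x : R) : 0 <= x -> cap h x <= INR (aT h).
Proof.
  intro Hx. pose proof (INR_aT_ge4 h). rewrite <- (Rpower_1 (INR (aT h))) at 2 by lra.
  apply Rle_Rpower; lra.
Qed.

Lemma cap_pos (h : nat) (x : R) : 0 < cap h x.
Proof. apply exp_pos. Qed.

(* [mu] is the base-[a(h)] logarithm of [M / (M - n)], and [M = a(h)^2]. *)
Lemma mu_ge_iff (h n : nat) (x : R) :
  ege (mu h n) (1 + x) <-> INR (MT h - n) <= cap h x.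
Proof.
  unfold mu. destruct (Nat.ltb n (MT h)) eqn:E; simpl.
  - apply Nat.ltb_lt in E.
    pose proof (INR_aT_ge4 h) as Ha.
    assert (Hla : 0 < ln (INR (aT h))) by (rewrite <- ln_1; apply ln_increasing; lra).
    assert (Hm : 0 < INR (MT h - n)) by (apply lt_0_INR; lia).
    assert (Hln : ln (INR (MT h) / INR (MT h - n))
                  = 2 * ln (INR (aT h)) - ln (INR (MT h - n))).
    { unfold Rdiv. rewrite ln_mult, ln_Rinv, INR_MT, ln_mult by (try apply Rinv_0_lt_compat;
        rewrite ?INR_MT; nra). ring. }
    unfold Rpower. rewrite Hln.
    split; intro H.
    + apply (Rmult_le_compat_r (ln (INR (aT h)))) in H; [|lra].
      unfold Rdiv in H. rewrite Rmult_assoc, Rinv_l, Rmult_1_r in H by lra.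
      rewrite <- (exp_ln (INR (MT h - n))) by lra.
      assert (Hle : ln (INR (MT h - n)) <= (1 - x) * ln (INR (aT h))) by nra.
      destruct Hle as [Hlt|Heq]; [left; apply exp_increasing, Hlt | rewrite Heq; lra].
    + rewrite <- (exp_ln (INR (MT h - n))) in H by lra.
      assert (ln (INR (MT h - n)) <= (1 - x) * ln (INR (aT h))).
      { destruct (Rle_or_lt (ln (INR (MT h - n))) ((1 - x) * ln (INR (aT h)))) as [?|Hlt]; auto.
        apply exp_increasing in Hlt. lra. }
      apply (Rmult_le_reg_r (ln (INR (aT h)))); [lra|].
      unfold Rdiv. rewrite Rmult_assoc, Rinv_l, Rmult_1_r by lra. nra.
  - apply Nat.ltb_ge in E. replace (MT h - n)%nat with 0%nat by lia.
    split; intros _; [left; apply cap_pos | exact I].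
Qed.

(** * Finite sums and counting *)

Lemma pdec_true (P : Prop) : P -> pdec P = true.
Proof. intro H. unfold pdec. destruct (excluded_middle_informative P); tauto. Qed.

Lemma pdec_false (P : Prop) : ~ P -> pdec P = false.
Proof. intro H. unfold pdec. destruct (excluded_middle_informative P); tauto. Qed.

Lemma pdec_true_inv (P : Prop) : pdec P = true -> P.
Proof. unfold pdec. destruct (excluded_middle_informative P); easy. Qed.

Lemma pdec_false_inv (P : Prop) : pdec P = false -> ~ P.
Proof. intros H HP. rewrite pdec_true in H by auto. discriminate. Qed.

Definition indR (P : Prop) : R := if pdec P then 1 else 0.

Lemma indR_1 (P : Prop) : P -> indR P = 1.
Proof. intro H; unfold indR; rewrite pdec_true; auto. Qed.

Lemma indR_0 (P : Prop) : ~ P -> indR P = 0.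
Proof. intro H; unfold indR; rewrite pdec_false; auto. Qed.

Lemma indR_01 (P : Prop) : 0 <= indR P <= 1.
Proof. unfold indR; destruct (pdec P); lra. Qed.

Lemma indR_not (P : Prop) : 1 - indR P = indR (~ P).
Proof.
  destruct (excluded_middle_informative P).
  - rewrite indR_1, indR_0 by tauto. ring.
  - rewrite indR_0, indR_1 by tauto. ring.
Qed.

Fixpoint sum_range (f : nat -> R) (lo n : nat) : R :=
  match n with O => 0 | S n' => sum_range f lo n' + f (lo + n')%nat end.

Lemma sum_range_ext (f g : nat -> R) lo n :
  (forall i, (lo <= i < lo + n)%nat -> f i = g i) -> sum_range f lo n = sum_range g lo n.
Proof.
  induction n; simpl; intros H; auto.
  rewrite IHn, H; auto; intros; try lia. apply H; lia.
Qed.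

Lemma sum_range_le (f g : nat -> R) lo n :
  (forall i, (lo <= i < lo + n)%nat -> f i <= g i) -> sum_range f lo n <= sum_range g lo n.
Proof.
  induction n; simpl; intros H; [lra|].
  assert (sum_range f lo n <= sum_range g lo n) by (apply IHn; intros; apply H; lia).
  assert (f (lo+n)%nat <= g (lo+n)%nat) by (apply H; lia). lra.
Qed.

Lemma sum_range_plus (f g : nat -> R) lo n :
  sum_range (fun i => f i + g i) lo n = sum_range f lo n + sum_range g lo n.
Proof. induction n; simpl; lra. Qed.

Lemma sum_range_minus (f g : nat -> R) lo n :
  sum_range (fun i => f i - g i) lo n = sum_range f lo n - sum_range g lo n.
Proof. induction n; simpl; lra. Qed.

Lemma sum_range_scal (c : R) (f : nat -> R) lo n :
  sum_range (fun i => c * f i) lo n = c * sum_range f lo n.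
Proof. induction n; simpl; lra. Qed.

Lemma sum_range_const (c : R) lo n : sum_range (fun _ => c) lo n = INR n * c.
Proof. induction n; simpl; [lra|]. rewrite IHn. destruct n; simpl; lra. Qed.

Lemma sum_range_bound (f : nat -> R) (c : R) lo n :
  (forall i, (lo <= i < lo + n)%nat -> f i <= c) -> sum_range f lo n <= INR n * c.
Proof. intro H. rewrite <- (sum_range_const c lo n). apply sum_range_le. auto. Qed.

Lemma sum_range_nonneg (f : nat -> R) lo n :
  (forall i, (lo <= i < lo + n)%nat -> 0 <= f i) -> 0 <= sum_range f lo n.
Proof.
  intro H. replace 0 with (INR n * 0) by ring. rewrite <- (sum_range_const 0 lo n).
  apply sum_range_le. auto.
Qed.

Lemma sum_range_exchange (f : nat -> nat -> R) lo1 n1 lo2 n2 :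
  sum_range (fun i => sum_range (fun j => f i j) lo2 n2) lo1 n1 =
  sum_range (fun j => sum_range (fun i => f i j) lo1 n1) lo2 n2.
Proof.
  induction n1; simpl.
  - rewrite sum_range_const. simpl. ring.
  - rewrite IHn1, <- sum_range_plus. reflexivity.
Qed.

Lemma sum_range_ge_term (f : nat -> R) lo n i :
  (forall i, (lo <= i < lo + n)%nat -> 0 <= f i) -> (lo <= i < lo + n)%nat ->
  f i <= sum_range f lo n.
Proof.
  induction n; simpl; intros H Hi; [lia|].
  destruct (Nat.eq_dec i (lo + n)).
  - subst. assert (0 <= sum_range f lo n) by (apply sum_range_nonneg; intros; apply H; lia). lra.
  - assert (f i <= sum_range f lo n) by (apply IHn; intros; try apply H; lia).
    assert (0 <= f (lo+n)%nat) by (apply H; lia). lra.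
Qed.

Lemma countP_S (P : nat -> Prop) lo n :
  countP P lo (S n) = (countP P lo n + (if pdec (P (lo + n)%nat) then 1 else 0))%nat.
Proof.
  unfold countP. rewrite seq_S, filter_app, length_app. simpl.
  destruct (pdec (P (lo+n)%nat)); simpl; lia.
Qed.

Lemma INR_countP (P : nat -> Prop) lo n :
  INR (countP P lo n) = sum_range (fun i => indR (P i)) lo n.
Proof.
  induction n; simpl; [reflexivity|].
  rewrite countP_S, plus_INR, IHn. unfold indR. destruct (pdec (P (lo+n)%nat)); simpl; lra.
Qed.

Lemma countP_markov (P : nat -> Prop) (f : nat -> R) (d : R) lo n :
  (forall i, (lo <= i < lo + n)%nat -> 0 <= f i) ->
  (forall i, (lo <= i < lo + n)%nat -> P i -> d <= f i) ->
  INR (countP P lo n) * d <= sum_range f lo n.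
Proof.
  intros H1 H2. rewrite INR_countP, Rmult_comm, <- sum_range_scal.
  apply sum_range_le. intros i Hi.
  destruct (excluded_middle_informative (P i)).
  - rewrite indR_1, Rmult_1_r by auto. auto.
  - rewrite indR_0, Rmult_0_r by auto. auto.
Qed.

Lemma countP_le (P : nat -> Prop) lo n : (countP P lo n <= n)%nat.
Proof. unfold countP. rewrite <- (length_seq n lo) at 2. apply filter_length_le. Qed.

Lemma countP_compl (P : nat -> Prop) lo n :
  (countP P lo n + countP (fun i => ~ P i) lo n = n)%nat.
Proof.
  apply INR_eq. rewrite plus_INR, !INR_countP, <- sum_range_plus.
  rewrite <- (Rmult_1_r (INR n)), <- (sum_range_const 1 lo n). apply sum_range_ext. intros i _.
  rewrite <- indR_not. ring.
Qed.

Lemma countP_mono (P Q : nat -> Prop) lo n :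
  (forall i, (lo <= i < lo + n)%nat -> P i -> Q i) -> (countP P lo n <= countP Q lo n)%nat.
Proof.
  intro H. apply INR_le. rewrite !INR_countP. apply sum_range_le. intros i Hi.
  destruct (excluded_middle_informative (P i)) as [HP|HP].
  - rewrite !indR_1; auto. lra.
  - rewrite (indR_0 _ HP). apply indR_01.
Qed.

Lemma countP_all (P : nat -> Prop) lo n :
  (forall i, (lo <= i < lo + n)%nat -> P i) -> countP P lo n = n.
Proof.
  intro H. pose proof (countP_le P lo n).
  pose proof (countP_mono (fun _ => True) P lo n (fun i Hi _ => H i Hi)).
  unfold countP in H1 at 1. rewrite filter_ext with (g := fun _ => true) in H1
    by (intro; apply pdec_true; exact I).
  rewrite forallb_filter_id, length_seq in H1 by (apply forallb_forall; auto). lia.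
Qed.

Lemma countP_pos (P : nat -> Prop) lo n :
  (1 <= countP P lo n)%nat -> exists a, (lo <= a < lo + n)%nat /\ P a.
Proof.
  induction n; intros H.
  - unfold countP in H; simpl in H; lia.
  - rewrite countP_S in H. destruct (pdec (P (lo+n)%nat)) eqn:E.
    + apply pdec_true_inv in E. exists (lo+n)%nat. split; auto; lia.
    + destruct IHn as [a [Ha Hb]]; [lia|]. exists a. split; auto; lia.
Qed.

Lemma countP_two (P : nat -> Prop) lo n :
  (2 <= countP P lo n)%nat -> exists a b, a <> b /\ P a /\ P b.
Proof.
  induction n; intros H.
  - unfold countP in H; simpl in H; lia.
  - rewrite countP_S in H. destruct (pdec (P (lo+n)%nat)) eqn:E.
    + apply pdec_true_inv in E.
      destruct (le_lt_dec 2 (countP P lo n)) as [H2|H2]; [apply IHn; auto|].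
      destruct (countP_pos P lo n) as [a [Ha1 Ha2]]; [lia|].
      exists a, (lo+n)%nat. split; auto. lia.
    + apply IHn. lia.
Qed.


Lemma sumR_map_le (f g : nat -> R) (u : list nat) :
  (forall k, In k u -> f k <= g k) -> sumR (map f u) <= sumR (map g u).
Proof.
  induction u; simpl; intros H; [lra|].
  assert (f a <= g a) by auto. assert (sumR (map f u) <= sumR (map g u)) by auto. lra.
Qed.

Lemma sumR_map_minus (f g : nat -> R) (u : list nat) :
  sumR (map (fun k => f k - g k) u) = sumR (map f u) - sumR (map g u).
Proof. induction u; simpl; lra. Qed.

Lemma sumR_map_const (c : R) (u : list nat) :
  sumR (map (fun _ => c) u) = INR (length u) * c.
Proof. induction u; simpl; [lra|]. rewrite IHu. destruct (length u); simpl; lra. Qed.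

Lemma sumR_map_sum_range (f : nat -> nat -> R) (u : list nat) lo n :
  sumR (map (fun k => sum_range (fun i => f k i) lo n) u) =
  sum_range (fun i => sumR (map (fun k => f k i) u)) lo n.
Proof.
  induction u; simpl.
  - rewrite sum_range_const. simpl. ring.
  - rewrite IHu, <- sum_range_plus. reflexivity.
Qed.

Lemma sumR_map_ge_filter (G : nat -> bool) (f : nat -> R) (c : R) (u : list nat) :
  0 <= c -> (forall k, In k u -> 0 <= f k) -> (forall k, In k u -> G k = true -> c <= f k) ->
  INR (length (filter G u)) * c <= sumR (map f u).
Proof.
  induction u; simpl; intros Hc H1 H2; [lra|].
  assert (IH : INR (length (filter G u)) * c <= sumR (map f u)) by (apply IHu; auto).
  destruct (G a) eqn:E.
  - assert (c <= f a) by auto. simpl length. rewrite S_INR. lra.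
  - assert (0 <= f a) by auto. lra.
Qed.

Lemma filter_all_true (A : nat -> bool) (v : list nat) :
  (forall x, In x v -> A x = true) -> filter A v = v.
Proof. induction v; simpl; intros H; auto. rewrite H, IHv; auto. Qed.

Lemma filter_all_false (A : nat -> bool) (v : list nat) :
  (forall x, In x v -> A x = false) -> filter A v = [].
Proof. induction v; simpl; intros H; auto. rewrite H, IHv; auto. Qed.

Lemma floor_exists (x : R) : 0 <= x -> exists n : nat, INR n <= x < INR n + 1.
Proof.
  intro Hx. destruct (archimed x) as [H1 H2].
  assert (Hz : (1 <= up x)%Z).
  { destruct (Z_lt_le_dec (up x) 1) as [Hl|Hl]; auto. exfalso.
    assert (Hl' : (up x <= 0)%Z) by lia. apply IZR_le in Hl'. simpl in Hl'. lra. }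
  exists (Z.to_nat (up x - 1)). rewrite INR_IZR_INZ, Z2Nat.id by lia.
  rewrite minus_IZR. simpl. lra.
Qed.

(** * Finitely additive measures *)

Lemma ratio_bounds (N r X c n eps : R) :
  0 < eps -> 0 <= r -> 0 <= X <= 1 -> eps * (N - r) = r + 1 ->
  N - r <= n <= N -> N * X - r <= c <= N * X -> 0 <= c ->
  X - eps < c / n < X + eps.
Proof.
  intros He Hr HX HN Hn Hc Hc0.
  assert (HNr : 0 < N - r) by nra.
  assert (Hnp : 0 < n) by lra.
  split; apply (Rmult_lt_reg_r n); auto; unfold Rdiv;
    rewrite Rmult_assoc, Rinv_l, Rmult_1_r by lra.
  - destruct (Rle_or_lt 0 (X - eps)).
    + assert ((X - eps) * n <= (X - eps) * N) by (apply Rmult_le_compat_l; lra). nra.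
    + nra.
  - assert ((X + eps) * (N - r) <= (X + eps) * n) by (apply Rmult_le_compat_l; lra). nra.
Qed.

Section FiniteAdditiveMeasure.

Variable Xi : (nat -> bool) -> R.
Hypothesis HXi : FAM Xi.

Lemma Xi_ext (A B : nat -> bool) : (forall n, A n = B n) -> Xi A = Xi B.
Proof. intro H. f_equal. apply functional_extensionality. auto. Qed.

Lemma Xi_nonneg A : 0 <= Xi A.
Proof. apply HXi. Qed.

Lemma Xi_full : Xi (fun _ => true) = 1.
Proof. apply HXi. Qed.

Lemma Xi_split A B : Xi A = Xi (fun n => A n && B n) + Xi (fun n => A n && negb (B n)).
Proof.
  destruct HXi as [_ [_ [Hadd _]]]. rewrite <- Hadd.
  - apply Xi_ext. intro n. destruct (A n), (B n); reflexivity.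
  - intro n. destruct (A n), (B n); reflexivity.
Qed.

Lemma Xi_empty : Xi (fun _ => false) = 0.
Proof. pose proof (Xi_split (fun _ => false) (fun _ => false)). simpl in H. lra. Qed.

Lemma Xi_mono A B : (forall n, A n = true -> B n = true) -> Xi A <= Xi B.
Proof.
  intro H. rewrite (Xi_split B A).
  replace (Xi (fun n => B n && A n)) with (Xi A).
  - pose proof (Xi_nonneg (fun n => B n && negb (A n))). lra.
  - apply Xi_ext. intro n. specialize (H n). destruct (A n), (B n); auto. symmetry; auto.
Qed.

Lemma Xi_le1 A : Xi A <= 1.
Proof. rewrite <- Xi_full. apply Xi_mono; auto. Qed.

Lemma Xi_diff A S : Xi A - Xi S <= Xi (fun n => A n && negb (S n)).
Proof.
  rewrite (Xi_split A S).
  assert (Xi (fun n => A n && S n) <= Xi S) by (apply Xi_mono; intro n; destruct (A n), (S n); auto).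
  lra.
Qed.

Lemma Xi_initial_segment K : Xi (fun n => Nat.ltb n K) = 0.
Proof.
  destruct HXi as [_ [_ [Hadd Hpt]]].
  induction K.
  - rewrite <- Xi_empty. apply Xi_ext. intro n. destruct n; reflexivity.
  - rewrite (Xi_ext _ (fun n => orb (Nat.ltb n K) (Nat.eqb n K))), Hadd, IHK, Hpt; [lra| |].
    + intro n. destruct (Nat.ltb_spec n K), (Nat.eqb_spec n K); auto; lia.
    + intro n. destruct (Nat.ltb_spec n (S K)), (Nat.ltb_spec n K), (Nat.eqb_spec n K);
        simpl; auto; lia.
Qed.

Lemma Xi_pos_unbounded A : 0 < Xi A -> forall K, exists k, (K <= k)%nat /\ A k = true.
Proof.
  intros HA K. apply NNPP. intro H.
  assert (Xi A <= Xi (fun n => Nat.ltb n K)).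
  { apply Xi_mono. intros n Hn. apply Nat.ltb_lt.
    destruct (le_lt_dec K n); auto. exfalso; apply H; exists n; auto. }
  rewrite Xi_initial_segment in H0. lra.
Qed.

Lemma Xi_pos_fresh_list A : 0 < Xi A -> forall n K,
  exists v, length v = n /\ NoDup v /\ forall x, In x v -> A x = true /\ (K <= x)%nat.
Proof.
  intros HA n. induction n; intro K.
  - exists []. split; [reflexivity|]. split; [constructor|]. intros x [].
  - destruct (Xi_pos_unbounded A HA K) as [k [Hk1 Hk2]].
    destruct (IHn (S k)) as [v [Hv1 [Hv2 Hv3]]].
    exists (k :: v). split; [simpl; auto|]. split.
    + constructor; auto. intro Hin. apply Hv3 in Hin. lia.
    + intros x [Hx|Hx]; [subst; auto|]. apply Hv3 in Hx. split; [tauto|lia].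
Qed.

Lemma Xi_sum_le_multiplicity M (S : nat -> nat -> bool) (U : nat -> bool) (c : R) :
  (forall l k, (l < M)%nat -> S l k = true -> U k = true) ->
  (forall k, U k = true -> INR (countP (fun l => S l k = true) 0 M) <= c) ->
  sum_range (fun l => Xi (S l)) 0 M <= c * Xi U.
Proof.
  revert S U c. induction M; intros S U c H1 H2.
  - simpl. destruct (Rle_or_lt 0 c).
    + pose proof (Xi_nonneg U). nra.
    + destruct (Req_dec (Xi U) 0) as [E|E]; [rewrite E; lra|].
      assert (0 < Xi U) by (pose proof (Xi_nonneg U); lra).
      destruct (Xi_pos_unbounded U H0 0) as [k [_ Hk]].
      apply H2 in Hk. unfold countP in Hk. simpl in Hk. lra.
  - simpl. set (T := S M).
    rewrite (sum_range_ext _ (fun l => Xi (fun n => S l n && T n) + Xi (fun n => S l n && negb (T n))))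
      by (intros; apply Xi_split).
    rewrite sum_range_plus.
    assert (IH1 : sum_range (fun l => Xi (fun n => S l n && T n)) 0 M <= (c - 1) * Xi T).
    { apply (IHM (fun l n => S l n && T n) T (c - 1)).
      - intros l k _ Hk. apply andb_prop in Hk. tauto.
      - intros k Hk. specialize (H2 k (H1 M k (Nat.lt_succ_diag_r M) Hk)).
        rewrite countP_S in H2. simpl in H2. unfold T in Hk. rewrite pdec_true in H2 by auto.
        rewrite plus_INR in H2. simpl in H2.
        replace (countP (fun l => S l k && T k = true) 0 M) with (countP (fun l => S l k = true) 0 M).
        + lra.
        + unfold countP. f_equal. apply filter_ext. intro l. unfold T. rewrite Hk, andb_true_r. auto. }
    assert (IH2 : sum_range (fun l => Xi (fun n => S l n && negb (T n))) 0 M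
                  <= c * Xi (fun n => U n && negb (T n))).
    { apply (IHM (fun l n => S l n && negb (T n)) (fun n => U n && negb (T n)) c).
      - intros l k Hl Hk. apply andb_prop in Hk. destruct Hk as [Hk1 Hk2].
        rewrite (H1 l k); auto.
      - intros k Hk. apply andb_prop in Hk. destruct Hk as [Hk1 Hk2].
        specialize (H2 k Hk1). rewrite countP_S, plus_INR in H2. simpl in H2.
        replace (countP (fun l => S l k && negb (T k) = true) 0 M) with (countP (fun l => S l k = true) 0 M).
        + assert (0 <= INR (if pdec (S M k = true) then 1%nat else 0%nat)) by apply pos_INR. lra.
        + unfold countP. f_equal. apply filter_ext. intro l. rewrite Hk2, andb_true_r. auto. }
    assert (EU : Xi U = Xi T + Xi (fun n => U n && negb (T n))).
    { rewrite (Xi_split U T). f_equal. apply Xi_ext. intro n.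
      destruct (T n) eqn:ET; [|rewrite andb_false_r; auto].
      rewrite andb_true_r. apply H1 in ET; auto. }
    rewrite EU. lra.
Qed.

Definition decides (P A : nat -> bool) : Prop :=
  (forall k, P k = true -> A k = true) \/ (forall k, P k = true -> A k = false).

Fixpoint atoms (L : list (nat -> bool)) : list (nat -> bool) :=
  match L with
  | [] => [fun _ => true]
  | S0 :: L' => flat_map (fun P => [fun n => P n && S0 n; fun n => P n && negb (S0 n)]) (atoms L')
  end.

Lemma atoms_partition (L : list (nat -> bool)) k :
  length (filter (fun P => P k) (atoms L)) = 1%nat.
Proof.
  induction L; simpl; auto.
  rewrite <- IHL. clear IHL. induction (atoms L); simpl; auto.
  destruct (a0 k), (a k); simpl; auto.
Qed.

Lemma atoms_decide (L : list (nat -> bool)) A P : In A L -> In P (atoms L) -> decides P A.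
Proof.
  revert A P. induction L as [|S0 L IH]; simpl; intros A P HA HP; [contradiction|].
  apply in_flat_map in HP. destruct HP as [P0 [HP0 HP]].
  simpl in HP. destruct HA as [HA|HA].
  - subst. destruct HP as [HP|[HP|[]]]; subst.
    + left. intros k Hk. apply andb_prop in Hk. tauto.
    + right. intros k Hk. apply andb_prop in Hk. destruct Hk. apply negb_true_iff. auto.
  - destruct (IH A P0 HA HP0) as [H|H]; destruct HP as [HP|[HP|[]]]; subst;
    [left|left|right|right]; intros k Hk; apply andb_prop in Hk; apply H; tauto.
Qed.

Lemma Xi_sum_atoms (L : list (nat -> bool)) A :
  sumR (map (fun P => Xi (fun n => P n && A n)) (atoms L)) = Xi A.
Proof.
  revert A. induction L as [|S0 L IH]; intro A; simpl.
  - rewrite Rplus_0_r. apply Xi_ext. intro; auto.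
  - rewrite <- (IH A). clear IH. induction (atoms L); simpl; auto.
    rewrite IHl, (Xi_split (fun n => a n && A n) S0).
    rewrite (Xi_ext (fun n => a n && S0 n && A n) (fun n => a n && A n && S0 n)),
            (Xi_ext (fun n => a n && negb (S0 n) && A n) (fun n => a n && A n && negb (S0 n)))
      by (intro n; destruct (a n), (S0 n), (A n); auto).
    lra.
Qed.

Lemma Xi_sample P (N : R) K : 0 <= N ->
  exists v, INR (length v) <= N * Xi P < INR (length v) + 1 /\ NoDup v /\
    forall x, In x v -> P x = true /\ (K <= x)%nat.
Proof.
  intro HN.
  assert (HXP : 0 <= N * Xi P) by (apply Rmult_le_pos; auto; apply Xi_nonneg).
  destruct (floor_exists _ HXP) as [np Hnp].
  destruct np as [|np].
  - exists []. split; [exact Hnp|]. split; [constructor|]. intros x [].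
  - destruct (Xi_pos_fresh_list P) with (n := S np) (K := K) as [v [Hv1 Hv2]].
    + destruct (Rle_or_lt (Xi P) 0); auto. exfalso.
      rewrite S_INR in Hnp. pose proof (pos_INR np). nra.
    + exists v. rewrite Hv1. auto.
Qed.

Lemma Xi_sample_atoms (Ps : list (nat -> bool)) :
  (forall k, (length (filter (fun P => P k) Ps) <= 1)%nat) ->
  forall (N : R) K, 0 <= N ->
  exists u, NoDup u /\
    (forall x, In x u -> (K <= x)%nat /\ exists P, In P Ps /\ P x = true) /\
    forall A, (forall P, In P Ps -> decides P A) ->
      N * sumR (map (fun P => Xi (fun n => P n && A n)) Ps) - INR (length Ps)
        <= INR (length (filter A u)) /\
      INR (length (filter A u)) <= N * sumR (map (fun P => Xi (fun n => P n && A n)) Ps).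
Proof.
  induction Ps as [|P Ps IH]; intros Hdisj N K HN.
  - exists []. split; [constructor|]. split; [intros x []|].
    intros A _. simpl. lra.
  - destruct (IH) with (N := N) (K := K) as [u' [Hu1 [Hu2 Hu3]]]; auto.
    { intro k. specialize (Hdisj k). simpl in Hdisj. destruct (P k); simpl in Hdisj; lia. }
    destruct (Xi_sample P N K HN) as [v [Hnp [Hv2 Hv3]]].
    exists (v ++ u'). split; [|split].
    + apply NoDup_app; auto. intros x Hx Hx'.
      apply Hv3 in Hx. apply Hu2 in Hx'. destruct Hx' as [_ [P' [HP' HP'x]]].
      specialize (Hdisj x). simpl in Hdisj. rewrite (proj1 Hx) in Hdisj. simpl in Hdisj.
      assert (In P' (filter (fun P => P x) Ps)) by (apply filter_In; auto).
      destruct (filter (fun P => P x) Ps); simpl in *; [contradiction|lia].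
    + intros x Hx. apply in_app_or in Hx. destruct Hx as [Hx|Hx].
      * apply Hv3 in Hx. split; [tauto|]. exists P. split; [left; auto|tauto].
      * apply Hu2 in Hx. destruct Hx as [HK [P' [HP' HP'x]]]. split; auto.
        exists P'. split; [right; auto|auto].
    + intros A HA. specialize (Hu3 A (fun P' H => HA P' (or_intror H))).
      rewrite filter_app, length_app, plus_INR. simpl map. simpl sumR. simpl length.
      rewrite S_INR.
      destruct (HA P (or_introl eq_refl)) as [Hs|Hs].
      * rewrite filter_all_true by (intros x Hx; apply Hs, Hv3, Hx).
        rewrite (Xi_ext _ P) by (intro n; destruct (P n) eqn:E; simpl; auto).
        split; nra.
      * rewrite filter_all_false by (intros x Hx; apply Hs, Hv3, Hx).
        rewrite (Xi_ext _ (fun _ => false)), Xi_empty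
          by (intro n; destruct (P n) eqn:E; simpl; auto).
        simpl. split; nra.
Qed.

Lemma Xi_finite_approx (L : list (nat -> bool)) (eps : R) (K : nat) : 0 < eps ->
  exists u, u <> [] /\ NoDup u /\ (forall x, In x u -> (K <= x)%nat) /\
    forall A, In A L ->
      Xi A - eps < INR (length (filter A u)) / INR (length u) /\
      INR (length (filter A u)) / INR (length u) < Xi A + eps.
Proof.
  intros He.
  set (r := INR (length (atoms L))).
  assert (Hr : 0 <= r) by apply pos_INR.
  set (N := r + (r + 1) / eps).
  assert (HN : eps * (N - r) = r + 1) by (unfold N; field; lra).
  assert (HN0 : 0 <= N).
  { unfold N. assert (0 <= (r+1)/eps) by (unfold Rdiv; apply Rmult_le_pos; [lra|left; apply Rinv_0_lt_compat; lra]). lra. }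
  destruct (Xi_sample_atoms (atoms L)) with (N := N) (K := K) as [u [Hu1 [Hu2 Hu3]]]; auto.
  { intro k. rewrite atoms_partition. auto. }
  destruct (Hu3 (fun _ => true)) as [Hf1 Hf2]; [intros P _; left; auto|].
  rewrite Xi_sum_atoms, Xi_full, filter_all_true in Hf1, Hf2 by auto.
  fold r in Hf1.
  assert (Hun : u <> []) by (intro E; rewrite E in Hf1; simpl in Hf1; nra).
  exists u. split; auto. split; auto. split; [intros x Hx; apply Hu2; auto|].
  intros A HA.
  destruct (Hu3 A) as [H1 H2]; [intros P HP; apply (atoms_decide L); auto|].
  rewrite Xi_sum_atoms in H1, H2. fold r in H1.
  apply (ratio_bounds N r); auto.
  - split; [apply Xi_nonneg|apply Xi_le1].
  - lra.
  - apply pos_INR.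
Qed.

End FiniteAdditiveMeasure.

(** * Subtrees of T* *)

Lemma prefix_refl s : prefix s s.
Proof. exists []. rewrite app_nil_r. auto. Qed.

Lemma prefix_app s r : prefix s (s ++ r).
Proof. exists r. auto. Qed.

Lemma prefix_trans a b c : prefix a b -> prefix b c -> prefix a c.
Proof. intros [r1 H1] [r2 H2]. subst. exists (r1 ++ r2). rewrite app_assoc. auto. Qed.

Lemma prefix_length s t : prefix s t -> (length s <= length t)%nat.
Proof. intros [r H]. subst. rewrite length_app. lia. Qed.

Lemma prefix_nil s : prefix [] s.
Proof. exists s. auto. Qed.

Lemma prefix_eq_len s t : prefix s t -> length s = length t -> s = t.
Proof.
  intros [r H] E. subst. rewrite length_app in E.
  destruct r; [rewrite app_nil_r; auto|simpl in E; lia].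
Qed.

Lemma prefix_antisym_len s t : prefix s t -> (length t <= length s)%nat -> s = t.
Proof. intros H Hl. apply prefix_eq_len; auto. apply prefix_length in H. lia. Qed.

Lemma prefix_cons_inv a s b t : prefix (a :: s) (b :: t) -> a = b /\ prefix s t.
Proof. intros [r H]. simpl in H. inversion H. split; auto. exists r; auto. Qed.

Lemma prefix_comparable x y z : prefix x z -> prefix y z -> prefix x y \/ prefix y x.
Proof.
  revert y z. induction x as [|a x IH]; intros y z Hx Hy.
  - left. apply prefix_nil.
  - destruct y as [|b y]; [right; apply prefix_nil|].
    destruct z as [|c z]; [destruct Hx as [r Hr]; discriminate|].
    apply prefix_cons_inv in Hx. apply prefix_cons_inv in Hy.
    destruct Hx as [E1 Hx], Hy as [E2 Hy]. subst.
    destruct (IH y z Hx Hy) as [[r H]|[r H]]; [left|right]; exists r; subst; auto.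
Qed.

Lemma prefix_snoc s t x : prefix s (t ++ [x]) -> prefix s t \/ s = t ++ [x].
Proof.
  intro H. destruct (prefix_comparable s t (t ++ [x]) H (prefix_app t [x])) as [H1|H1]; auto.
  destruct H1 as [r Hr]. subst. destruct H as [r' Hr'].
  rewrite <- app_assoc in Hr'. apply app_inv_head in Hr'.
  destruct r as [|y r]; [left; rewrite app_nil_r; apply prefix_refl|].
  simpl in Hr'. inversion Hr'. destruct r; [|discriminate]. subst. right. auto.
Qed.

Lemma nth_snoc_prefix t x s : prefix (t ++ [x]) s -> nth (length t) s 0%nat = x.
Proof.
  intros [r Hr]. subst. rewrite <- app_assoc, app_nth2 by lia. rewrite Nat.sub_diag. reflexivity.
Qed.

Lemma subtree_prefix p s t : subtree p -> p t -> prefix s t -> p s.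
Proof. intros [_ [_ H]] Ht [r Hr]. subst. apply (H s r). auto. Qed.

Lemma Tstar_prefix s t : Tstar t -> prefix s t -> Tstar s.
Proof.
  intros H [r Hr] i Hi. subst. specialize (H i). rewrite length_app in H.
  rewrite app_nth1 in H by auto. apply H. lia.
Qed.

Lemma Tstar_snoc t l : Tstar t -> (l < MT (length t))%nat -> Tstar (t ++ [l]).
Proof.
  intros H Hl i Hi. rewrite length_app in Hi. simpl in Hi.
  destruct (Nat.eq_dec i (length t)).
  - subst. rewrite app_nth2 by lia. rewrite Nat.sub_diag. simpl. auto.
  - rewrite app_nth1 by lia. apply H. lia.
Qed.

Lemma econd_subtree (p : Econd) : subtree (proj1_sig p).
Proof. apply (proj2_sig p). Qed.

Lemma econd_prefix (p : Econd) s t : proj1_sig p t -> prefix s t -> proj1_sig p s.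
Proof. apply subtree_prefix, econd_subtree. Qed.

Lemma stem_len_unique p s1 s2 : is_stem p s1 -> is_stem p s2 -> length s1 = length s2.
Proof.
  intros [H1 [H2 H3]] [H4 [H5 H6]].
  specialize (H3 s2 H4 H5). specialize (H6 s1 H1 H2). lia.
Qed.

(* Every node is comparable with [s], so no node below [s] splits. *)
Lemma stem_of_spine (p : Tree) (s : list nat) :
  p s -> (forall t, p t -> prefix t s \/ prefix s t) -> splitting p s -> is_stem p s.
Proof.
  intros Hs Hcomp Hspl. split; auto. split; auto.
  intros t Ht [a [b [Hab [Ha Hb]]]].
  destruct (le_lt_dec (length s) (length t)) as [Hl|Hl]; auto. exfalso.
  assert (Hsucc : forall x, p (t ++ [x]) -> nth (length t) s 0%nat = x).
  { intros x Hx. destruct (Hcomp _ Hx) as [H|H]; [apply nth_snoc_prefix; auto|].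
    rewrite (prefix_antisym_len _ _ H); [apply nth_snoc_prefix, prefix_refl|].
    rewrite length_app. simpl. lia. }
  apply Hab. rewrite <- (Hsucc a Ha), <- (Hsucc b Hb). auto.
Qed.

Lemma INR_missing (p : Tree) t :
  INR (missing p t) = sum_range (fun l => indR (~ p (t ++ [l]))) 0 (MT (length t)).
Proof.
  rewrite <- INR_countP. unfold nsucc.
  pose proof (countP_compl (fun l => p (t ++ [l])) 0 (MT (length t))). f_equal. lia.
Qed.

Lemma inv_INR_nonneg (n : nat) : 0 <= 1 / INR n.
Proof.
  unfold Rdiv. rewrite Rmult_1_l. destruct n; [simpl; rewrite Rinv_0; lra|].
  apply Rlt_le, Rinv_0_lt_compat, lt_0_INR. lia.
Qed.

Lemma inv_INR_le (a b : nat) : (1 <= a)%nat -> (a <= b)%nat -> 1 / INR b <= 1 / INR a.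
Proof.
  intros H1 H2. assert (1 <= INR a) by (apply (le_INR 1); auto).
  assert (INR a <= INR b) by (apply le_INR; auto).
  unfold Rdiv. rewrite !Rmult_1_l. apply Rinv_le_contravar; lra.
Qed.

(* At most [a(h)] of the [a(h)^2] successors are missing, so at least two are present. *)
Lemma nsucc_ge2 (p : Tree) t x :
  0 <= x -> INR (missing p t) <= cap (length t) x -> (2 <= nsucc p t)%nat.
Proof.
  intros Hx H. pose proof (cap_le_aT (length t) x Hx).
  assert (H1 : (missing p t <= aT (length t))%nat) by (apply INR_le; lra).
  pose proof (aT_ge4 (length t)). unfold MT, M_of in H1. fold (aT (length t)) in H1. nia.
Qed.

Lemma splitting_of_missing (p : Tree) t x :
  0 <= x -> INR (missing p t) <= cap (length t) x -> splitting p t.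
Proof.
  intros Hx H. destruct (countP_two _ _ _ (nsucc_ge2 p t x Hx H)) as [a [b Hab]].
  exists a, b. exact Hab.
Qed.

Lemma succ_of_missing (p : Tree) t x :
  0 <= x -> INR (missing p t) <= cap (length t) x ->
  exists l, (l < MT (length t))%nat /\ p (t ++ [l]).
Proof.
  intros Hx H. pose proof (nsucc_ge2 p t x Hx H).
  destruct (countP_pos (fun l => p (t ++ [l])) 0 (MT (length t))) as [l [Hl1 Hl2]].
  - unfold nsucc in H0. lia.
  - exists l. split; auto. lia.
Qed.

Definition missing_bounded (p : Tree) (s : list nat) (x : R) : Prop :=
  forall t, p t -> prefix s t -> INR (missing p t) <= cap (length t) x.

Lemma econd_missing_bounded (p : Econd) : exists st, is_stem (proj1_sig p) st /\
  (1 <= length st)%nat /\ missing_bounded (proj1_sig p) st (1 / INR (length st)).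
Proof.
  destruct p as [p [Hsub [st [Hst [Hlen Hn]]]]]. exists st. split; auto. split; auto.
  intros t Ht Hpre. apply mu_ge_iff. apply Hn; auto.
Qed.

Lemma inE_of_missing_bounded (p : Tree) st :
  subtree p -> p st -> (1 <= length st)%nat ->
  (forall t, p t -> prefix t st \/ prefix st t) ->
  missing_bounded p st (1 / INR (length st)) -> inE p.
Proof.
  intros Hsub Hst Hlen Hspine Hn. split; auto. exists st. split; [|split; auto].
  - apply stem_of_spine; auto.
    apply (splitting_of_missing p st (1 / INR (length st))); [apply inv_INR_nonneg|].
    apply Hn; auto. apply prefix_refl.
  - intros t Ht Hpre. apply mu_ge_iff, Hn; auto.
Qed.

Lemma missing_bounded_climb (p : Econd) st x :
  proj1_sig p st -> 0 <= x -> missing_bounded (proj1_sig p) st x ->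
  forall n, exists t, proj1_sig p t /\ prefix st t /\ length t = (length st + n)%nat.
Proof.
  intros Hst Hx Hn n. induction n.
  - exists st. split; auto. split; [apply prefix_refl|lia].
  - destruct IHn as [t [Ht1 [Ht2 Ht3]]].
    destruct (succ_of_missing (proj1_sig p) t x Hx (Hn t Ht1 Ht2)) as [l [_ Hl']].
    exists (t ++ [l]). split; auto. split.
    + apply (prefix_trans _ t); auto. apply prefix_app.
    + rewrite length_app. simpl. lia.
Qed.

(** * Densities along the intervals and the limit tree *)

(* The gap between the exponents [1 - 1/m] and [1 - 1/hs] is at least [2 / (h + 2)],
   and [a(h) ^ (2 / (h+2)) = pi(h)^2] dominates [(4 h^2)^2]. *)
Lemma cap_absorbs_quartic (h hs m : nat) : (2 <= m)%nat -> (3 * m < hs)%nat -> (hs <= h)%nat ->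
  (4 * INR h * INR h) * (4 * INR h * INR h) * cap h (1 / INR m) <= cap h (1 / INR hs).
Proof.
  intros Hm Hs Hh.
  assert (Hm' : 2 <= INR m) by (apply (le_INR 2); lia).
  assert (Hs' : 3 * INR m + 1 <= INR hs).
  { replace 3 with (INR 3) by (simpl; ring).
    rewrite <- mult_INR, <- S_INR. apply le_INR; lia. }
  assert (Hh' : INR hs <= INR h) by (apply le_INR; lia).
  pose proof (INR_aT_ge4 h) as Ha.
  replace (1 - 1 / INR hs) with ((1 - 1 / INR m) + (1 / INR m - 1 / INR hs)) by ring.
  rewrite Rpower_plus, (Rmult_comm (Rpower _ (1 - 1 / INR m))).
  apply Rmult_le_compat_r; [left; apply cap_pos|].
  assert (Hexp : 2 / (INR h + 2) <= 1 / INR m - 1 / INR hs).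
  { assert (E : 1 / INR m - 1 / INR hs = (INR hs - INR m) / (INR m * INR hs)) by (field; lra).
    rewrite E. unfold Rdiv.
    apply (Rmult_le_reg_r ((INR h + 2) * (INR m * INR hs))); [repeat apply Rmult_lt_0_compat; lra|].
    replace (2 * / (INR h + 2) * ((INR h + 2) * (INR m * INR hs))) with (2 * (INR m * INR hs))
      by (field; lra).
    replace ((INR hs - INR m) * / (INR m * INR hs) * ((INR h + 2) * (INR m * INR hs)))
      with ((INR hs - INR m) * (INR h + 2)) by (field; nra).
    nra. }
  apply (Rle_trans _ (Rpower (INR (aT h)) (2 / (INR h + 2)))); [|apply Rle_Rpower; lra].
  unfold aT, a_of. fold (piT h). rewrite pow_INR.
  assert (Hp : 0 < INR (piT h)) by (pose proof (piT_ge2 h); apply lt_0_INR; lia).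
  rewrite <- Rpower_pow, Rpower_mult by auto.
  replace (INR (h + 2) * (2 / (INR h + 2))) with (INR 2)
    by (rewrite plus_INR; simpl; field; pose proof (pos_INR h); lra).
  rewrite Rpower_pow by auto.
  pose proof (piT_ge_sq h ltac:(lia)) as Hpi. apply le_INR in Hpi.
  rewrite !mult_INR, plus_INR in Hpi. simpl in Hpi.
  pose proof (pos_INR h) as Hh0. simpl pow.
  set (P := INR (piT h)) in *. set (X := INR h) in *.
  assert (4 * X * X <= P) by nra.
  assert ((4 * X * X) * (4 * X * X) <= P * P) by (apply Rmult_le_compat; nra).
  lra.
Qed.

Section IntervalDensity.

Variable start : nat -> nat.
Hypothesis Hstart : interval_partition start.

Lemma Ilen_pos k : 0 < INR (Ilen start k).
Proof.
  destruct Hstart as [_ [H _]]. apply lt_0_INR. unfold Ilen. specialize (H k). lia.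
Qed.

Lemma start_mono a b : (a <= b)%nat -> (start a <= start b)%nat.
Proof.
  destruct Hstart as [_ [H _]]. intro Hab. induction Hab; auto. specialize (H m). lia.
Qed.

Lemma start_add_Ilen k : (start k + Ilen start k = start (S k))%nat.
Proof. destruct Hstart as [_ [H _]]. unfold Ilen. specialize (H k). lia. Qed.

Definition density (qs : nat -> Econd) (k : nat) (t : list nat) : R :=
  INR (countP (fun l => proj1_sig (qs l) t) (start k) (Ilen start k)) / INR (Ilen start k).

Lemma density_range qs k t : 0 <= density qs k t <= 1.
Proof.
  unfold density. pose proof (Ilen_pos k).
  pose proof (le_INR _ _ (countP_le (fun l => proj1_sig (qs l) t) (start k) (Ilen start k))).
  pose proof (pos_INR (countP (fun l => proj1_sig (qs l) t) (start k) (Ilen start k))).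
  split; unfold Rdiv.
  - apply Rmult_le_pos; auto. left. apply Rinv_0_lt_compat. auto.
  - apply (Rmult_le_reg_r (INR (Ilen start k))); auto.
    rewrite Rmult_assoc, Rinv_l, Rmult_1_r, Rmult_1_l by lra. auto.
Qed.

Lemma density_antitone qs k t t' : prefix t t' -> density qs k t' <= density qs k t.
Proof.
  intros Hp. unfold density. unfold Rdiv.
  apply Rmult_le_compat_r; [left; apply Rinv_0_lt_compat, Ilen_pos|].
  apply le_INR, countP_mono. intros l _ Hl. apply (econd_prefix _ _ t'); auto.
Qed.

(* Each [q_l] misses at most [a(h)^(1 - 1/m)] successors of a node of height [h >= hs],
   so averaging over [I_k] bounds the total drop of the density over all successors. *)
Lemma density_drop_sum qs k t hs m :
  (forall l, loss_ok (proj1_sig (qs l)) hs m) -> (hs <= length t)%nat ->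
  sum_range (fun x => density qs k t - density qs k (t ++ [x])) 0 (MT (length t))
    <= cap (length t) (1 / INR m).
Proof.
  intros Hloss Hh.
  set (L := Ilen start k). set (lo := start k). set (A := cap (length t) (1 / INR m)).
  assert (HL : 0 < INR L) by apply Ilen_pos.
  rewrite (sum_range_ext _ (fun x => / INR L * sum_range
      (fun l => indR (proj1_sig (qs l) t) - indR (proj1_sig (qs l) (t ++ [x]))) lo L))
    by (intros x _; unfold density; fold L lo; rewrite !INR_countP, sum_range_minus;
        unfold Rdiv; ring).
  rewrite sum_range_scal, sum_range_exchange.
  assert (Hper : forall l, sum_range (fun x => indR (proj1_sig (qs l) t)
                  - indR (proj1_sig (qs l) (t ++ [x]))) 0 (MT (length t)) <= A).
  { intro l. destruct (excluded_middle_informative (proj1_sig (qs l) t)) as [Ht|Ht].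
    - rewrite indR_1 by auto.
      rewrite (sum_range_ext _ (fun x => indR (~ proj1_sig (qs l) (t ++ [x]))))
        by (intros; apply indR_not).
      rewrite <- INR_missing. apply mu_ge_iff.
      destruct (Hloss l) as [_ [_ H]]. apply H; auto.
    - rewrite (sum_range_ext _ (fun _ => 0)).
      + rewrite sum_range_const, Rmult_0_r. left. apply cap_pos.
      + intros x _. rewrite !indR_0; [ring| |auto].
        intro Hx. apply Ht. apply (econd_prefix _ _ (t ++ [x])); auto. apply prefix_app. }
  assert (H : sum_range (fun l => sum_range (fun x => indR (proj1_sig (qs l) t)
            - indR (proj1_sig (qs l) (t ++ [x]))) 0 (MT (length t))) lo L <= INR L * A)
    by (apply sum_range_bound; intros; apply Hper).
  apply (Rmult_le_compat_l (/ INR L)) in H; [|left; apply Rinv_0_lt_compat; auto].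
  rewrite <- Rmult_assoc, Rinv_l, Rmult_1_l in H by lra. auto.
Qed.

(* [slack hs h] is the tolerated density deficit at height [h] above a stem of height [hs]:
   it starts at [0] and increases by at least [2 / (4 h^2)] per level, staying below
   [1 / (2 (hs - 1))]. *)
Definition slack (hs h : nat) : R := 1 / (2 * (INR hs - 1)) - 1 / (2 * (INR h - 1)).

Lemma slack_step hs h : (2 <= hs <= h)%nat ->
  slack hs h + 2 * (1 / (4 * INR h * INR h)) <= slack hs (S h).
Proof.
  intro H. unfold slack. rewrite S_INR.
  assert (Hh : 2 <= INR h) by (apply (le_INR 2); lia).
  assert (1 / (2 * (INR h - 1)) - 1 / (2 * (INR h + 1 - 1)) = 1 / (2 * INR h * (INR h - 1)))
    by (field; lra).
  assert (1 / (2 * INR h * INR h) <= 1 / (2 * INR h * (INR h - 1))).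
  { apply Rmult_le_compat_l; [lra|]. apply Rinv_le_contravar; nra. }
  assert (2 * (1 / (4 * INR h * INR h)) = 1 / (2 * INR h * INR h)) by (field; lra).
  lra.
Qed.

Lemma slack_bounds hs h : (2 <= hs <= h)%nat -> 0 <= slack hs h <= 1 / (2 * (INR hs - 1)).
Proof.
  intro H. unfold slack.
  assert (Hs : 2 <= INR hs) by (apply (le_INR 2); lia).
  assert (Hh : INR hs <= INR h) by (apply le_INR; lia).
  assert (0 < 1 / (2 * (INR h - 1))) by (unfold Rdiv; rewrite Rmult_1_l; apply Rinv_0_lt_compat; lra).
  assert (1 / (2 * (INR h - 1)) <= 1 / (2 * (INR hs - 1))).
  { unfold Rdiv. rewrite !Rmult_1_l. apply Rinv_le_contravar; lra. }
  lra.
Qed.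

Lemma slack_diag hs : slack hs hs = 0.
Proof. unfold slack. ring. Qed.

Variable Xi : (nat -> bool) -> R.
Hypothesis HXi : FAM Xi.

Definition dense_set (qs : nat -> Econd) (hs : nat) (t : list nat) : nat -> bool :=
  fun k => pdec (1 - slack hs (length t) <= density qs k t).

Definition good (qs : nat -> Econd) (hs : nat) (t : list nat) : Prop :=
  1 - slack hs (length t) <= Xi (dense_set qs hs t).

Lemma good_snoc qs hs t l :
  (2 <= hs <= length t)%nat -> good qs hs t ->
  Xi (fun k => pdec (density qs k (t ++ [l]) < density qs k t - 1 / (4 * INR (length t) * INR (length t))))
    <= 1 / (4 * INR (length t) * INR (length t)) ->
  good qs hs (t ++ [l]).
Proof.
  intros Hh Hg HS. unfold good in *.
  set (d := 1 / (4 * INR (length t) * INR (length t))) in *.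
  set (Sl := fun k => pdec (density qs k (t ++ [l]) < density qs k t - d)) in *.
  assert (Hlen : length (t ++ [l]) = S (length t)) by (rewrite length_app; simpl; lia).
  pose proof (slack_step hs (length t) Hh) as Hst. fold d in Hst.
  assert (Hd : 0 <= d).
  { unfold d. assert (2 <= INR (length t)) by (apply (le_INR 2); lia).
    unfold Rdiv. rewrite Rmult_1_l. left. apply Rinv_0_lt_compat. nra. }
  assert (Hsub : Xi (fun k => dense_set qs hs t k && negb (Sl k)) <= Xi (dense_set qs hs (t ++ [l]))).
  { apply Xi_mono; auto. intros k Hk. apply andb_prop in Hk. destruct Hk as [H1 H2].
    apply negb_true_iff in H2. apply pdec_false_inv in H2. apply pdec_true_inv in H1.
    unfold dense_set. apply pdec_true. rewrite Hlen. lra. }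
  pose proof (Xi_diff Xi HXi (dense_set qs hs t) Sl).
  rewrite Hlen. lra.
Qed.

(* A successor [t ++ [x]] can only fail to be good if the density drops by [d = 1/(4h^2)]
   on a set of measure [> d]; the drops are summable ([density_drop_sum]), so by double
   counting ([Xi_sum_le_multiplicity]) there are at most [cap h (1/m) / d^2] bad successors. *)
Lemma good_missing_bound qs hs m t :
  (forall l, loss_ok (proj1_sig (qs l)) hs m) -> (hs <= length t)%nat -> good qs hs t ->
  INR (MT (length t) - countP (fun x => good qs hs (t ++ [x])) 0 (MT (length t)))
    <= cap (length t) (1 / INR hs).
Proof.
  intros Hloss Hh Hg.
  destruct (Hloss 0%nat) as [Hm [Hs _]].
  set (h := length t) in *. set (M := MT h).
  set (d := 1 / (4 * INR h * INR h)).
  assert (HhR : 2 <= INR h) by (apply (le_INR 2); lia).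
  assert (Hd : 0 < d) by (unfold d, Rdiv; rewrite Rmult_1_l; apply Rinv_0_lt_compat; nra).
  set (A := cap h (1 / INR m)).
  set (Sl := fun x k => pdec (density qs k (t ++ [x]) < density qs k t - d)).
  assert (Hmult : forall k, INR (countP (fun x => Sl x k = true) 0 M) <= A / d).
  { intro k.
    assert (H1 : INR (countP (fun x => Sl x k = true) 0 M) * d
                 <= sum_range (fun x => density qs k t - density qs k (t ++ [x])) 0 M).
    { apply countP_markov.
      - intros x _. pose proof (density_antitone qs k t (t ++ [x]) (prefix_app t [x])). lra.
      - intros x _ Hx. apply pdec_true_inv in Hx. lra. }
    pose proof (density_drop_sum qs k t hs m Hloss Hh) as H2. fold h M A in H2.
    apply (Rmult_le_reg_r d); auto. unfold Rdiv. rewrite Rmult_assoc, Rinv_l, Rmult_1_r by lra.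
    lra. }
  assert (Hsum : sum_range (fun x => Xi (Sl x)) 0 M <= A / d).
  { rewrite <- (Rmult_1_r (A / d)), <- (Xi_full Xi HXi). apply Xi_sum_le_multiplicity; auto. }
  assert (Hbad : INR (countP (fun x => ~ good qs hs (t ++ [x])) 0 M) * d <= A / d).
  { eapply Rle_trans; [|apply Hsum]. apply countP_markov.
    - intros; apply Xi_nonneg; auto.
    - intros x _ Hx. destruct (Rle_or_lt d (Xi (Sl x))); auto. exfalso. apply Hx.
      apply good_snoc; auto; [lia|left; auto]. }
  pose proof (countP_compl (fun x => good qs hs (t ++ [x])) 0 M) as Hc. cbv beta in Hc.
  replace (M - countP (fun x => good qs hs (t ++ [x])) 0 M)%nat
    with (countP (fun x => ~ good qs hs (t ++ [x])) 0 M) by lia.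
  eapply Rle_trans; [|apply (cap_absorbs_quartic h hs m); auto].
  apply (Rmult_le_compat_r (/ d)) in Hbad; [|left; apply Rinv_0_lt_compat; auto].
  rewrite Rmult_assoc, Rinv_r, Rmult_1_r in Hbad by lra.
  eapply Rle_trans; [exact Hbad|]. right. unfold A, d. field. lra.
Qed.

Definition uniform_seq (qs : nat -> Econd) (s : list nat) (m : nat) : Prop :=
  forall l, stem_is (qs l) s /\ loss_ok (proj1_sig (qs l)) (length s) m.

Definition limtree (qs : nat -> Econd) (s : list nat) : Tree :=
  fun t => prefix t s \/ (prefix s t /\ Tstar t /\
    forall t0, prefix s t0 -> prefix t0 t -> good qs (length s) t0).

Section UniformSequence.

Variables (qs : nat -> Econd) (s : list nat) (m : nat).
Hypothesis Hunif : uniform_seq qs s m.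

Lemma good_stem : good qs (length s) s.
Proof.
  unfold good. rewrite slack_diag.
  rewrite (Xi_ext Xi (dense_set qs (length s) s) (fun _ => true)); [rewrite Xi_full; auto; lra|].
  intro k. unfold dense_set. apply pdec_true. rewrite slack_diag.
  unfold density. rewrite countP_all.
  - unfold Rdiv. rewrite Rinv_r; [lra|]. pose proof (Ilen_pos k). lra.
  - intros l _. apply (Hunif l).
Qed.

Lemma Tstar_stem : Tstar s.
Proof. destruct (Hunif 0%nat) as [[H _] _]. apply (econd_subtree (qs 0%nat)), H. Qed.

Lemma limtree_above t : limtree qs s t -> prefix s t ->
  Tstar t /\ forall t0, prefix s t0 -> prefix t0 t -> good qs (length s) t0.
Proof.
  intros [H|[_ H]] Hst; auto.
  rewrite <- (prefix_antisym_len _ _ Hst (prefix_length _ _ H)).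
  split; [apply Tstar_stem|].
  intros t0 H1 H2. rewrite <- (prefix_antisym_len _ _ H1 (prefix_length _ _ H2)).
  apply good_stem.
Qed.

Lemma limtree_snoc t x : limtree qs s t -> prefix s t -> (x < MT (length t))%nat ->
  good qs (length s) (t ++ [x]) -> limtree qs s (t ++ [x]).
Proof.
  intros Ht Hst Hx Hg.
  destruct (limtree_above t Ht Hst) as [HT Hgs].
  right. split; [apply (prefix_trans _ t); auto; apply prefix_app|].
  split; [apply Tstar_snoc; auto|].
  intros t0 H1 H2. apply prefix_snoc in H2. destruct H2 as [H2|H2]; [apply Hgs; auto|subst; auto].
Qed.

Lemma limtree_missing_bounded :
  missing_bounded (limtree qs s) s (1 / INR (length s)).
Proof.
  intros t Ht Hst.
  destruct (limtree_above t Ht Hst) as [HT Hgs].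
  assert (Hle : (countP (fun x => good qs (length s) (t ++ [x])) 0 (MT (length t))
                 <= nsucc (limtree qs s) t)%nat).
  { apply countP_mono. intros x Hx Hg. apply limtree_snoc; auto. lia. }
  eapply Rle_trans; [|apply (good_missing_bound qs (length s) m t)].
  - apply le_INR. lia.
  - intro l. apply Hunif.
  - apply prefix_length; auto.
  - apply Hgs; auto. apply prefix_refl.
Qed.

Lemma limtree_inE : inE (limtree qs s).
Proof.
  destruct (Hunif 0%nat) as [_ [Hm [Hs _]]].
  apply (inE_of_missing_bounded _ s); [split; [|split]| |lia| |apply limtree_missing_bounded].
  - left. apply prefix_nil.
  - intros t [Ht|[_ [Ht _]]]; auto. apply (Tstar_prefix t s); auto. apply Tstar_stem.
  - intros a b [Hab|[Hsab [HT Hg]]].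
    + left. apply (prefix_trans _ (a ++ b)); auto. apply prefix_app.
    + destruct (prefix_comparable a s (a ++ b) (prefix_app a b) Hsab) as [H|H]; [left; auto|].
      right. split; auto. split; [apply (Tstar_prefix a (a ++ b)); auto; apply prefix_app|].
      intros t0 H1 H2. apply Hg; auto. apply (prefix_trans _ a); auto. apply prefix_app.
  - left. apply prefix_refl.
  - intros t [Ht|[Ht _]]; auto.
Qed.

End UniformSequence.

(* Sequences that are not uniform are sent to their first member; the limit property
   says nothing about them. *)
Definition lim_E (qs : nat -> Econd) : Econd :=
  match excluded_middle_informative
          (exists s, (exists m, uniform_seq qs s m) /\ inE (limtree qs s)) with
  | left H =>
      exist _ (limtree qs (proj1_sig (constructive_indefinite_description _ H)))
              (proj2 (proj2_sig (constructive_indefinite_description _ H)))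
  | right _ => qs 0%nat
  end.

Lemma lim_E_limtree qs s m : uniform_seq qs s m ->
  exists s' m', uniform_seq qs s' m' /\ length s' = length s /\
    proj1_sig (lim_E qs) = limtree qs s'.
Proof.
  intro Hs. unfold lim_E. destruct (excluded_middle_informative _) as [H|H].
  - destruct (constructive_indefinite_description _ H) as [s' [[m' Hm'] Hin]]. simpl.
    exists s', m'. split; auto. split; auto.
    apply (stem_len_unique (proj1_sig (qs 0%nat))); [apply Hm'|apply Hs].
  - exfalso. apply H. exists s. split; [exists m; auto|]. apply (limtree_inE qs s m Hs).
Qed.

End IntervalDensity.

(** * Amalgamation above a high node *)

Lemma pow2_ge (n : nat) : INR n + 1 <= 2 ^ n.
Proof. induction n; [simpl; lra|]. rewrite S_INR. simpl pow. pose proof (pos_INR n). lra. Qed.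

Lemma exists_pow2_ge (c : R) : exists n : nat, c <= 2 ^ n.
Proof.
  destruct (Rle_or_lt c 0); [exists 0%nat; simpl; lra|].
  destruct (floor_exists c) as [n Hn]; [lra|]. exists (S n).
  pose proof (pow2_ge (S n)). rewrite S_INR in H0. lra.
Qed.

(* [a(h) >= 2^h] and [h >= 2K(N+1)], so [a(h)^(1/(2K)) >= 2^(N+1) > N + 1]. *)
Lemma cap_absorbs_count (h H K N : nat) : (1 <= K)%nat -> (2 * K * (N + 1) <= H)%nat -> (H <= h)%nat ->
  (INR N + 1) * cap h (1 / INR K) <= cap h (1 / INR H).
Proof.
  intros HK HH Hh.
  assert (HKr : 1 <= INR K) by (apply (le_INR 1); lia).
  assert (HHr : 2 * INR K * (INR N + 1) <= INR H).
  { apply le_INR in HH. rewrite !mult_INR, plus_INR in HH. simpl in HH. lra. }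
  assert (HN0 : 0 <= INR N) by apply pos_INR.
  assert (HhH : INR H <= INR h) by (apply le_INR; auto).
  pose proof (INR_aT_ge4 h) as Ha.
  replace (1 - 1 / INR H) with ((1 - 1 / INR K) + (1 / INR K - 1 / INR H)) by ring.
  rewrite Rpower_plus, (Rmult_comm (Rpower _ (1 - 1 / INR K))).
  apply Rmult_le_compat_r; [left; apply cap_pos|].
  assert (Hexp : 1 / (2 * INR K) <= 1 / INR K - 1 / INR H).
  { assert (E : 1 / INR K - 1 / INR H - 1 / (2 * INR K) = (INR H - 2 * INR K) / (2 * INR K * INR H))
      by (field; nra).
    assert (0 <= (INR H - 2 * INR K) / (2 * INR K * INR H)).
    { unfold Rdiv. apply Rmult_le_pos; [nra|]. left. apply Rinv_0_lt_compat. nra. }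
    lra. }
  apply (Rle_trans _ (Rpower (INR (aT h)) (1 / (2 * INR K)))); [|apply Rle_Rpower; lra].
  apply (Rle_trans _ (Rpower (2 ^ h) (1 / (2 * INR K)))).
  - rewrite <- Rpower_pow, Rpower_mult by lra.
    apply (Rle_trans _ (Rpower 2 (INR N + 1))).
    + rewrite <- S_INR, Rpower_pow by lra. pose proof (pow2_ge (S N)). lra.
    + apply Rle_Rpower; [lra|].
      apply (Rmult_le_reg_r (2 * INR K)); [lra|].
      replace (INR h * (1 / (2 * INR K)) * (2 * INR K)) with (INR h) by (field; lra). nra.
  - apply Rle_Rpower_l.
    + unfold Rdiv. rewrite Rmult_1_l. left. apply Rinv_0_lt_compat. lra.
    + split; [apply pow_lt; lra|].
      pose proof (INR_aT_ge_pow2 h). assert (2 ^ h <= 2 ^ (h + 2)) by (apply Rle_pow; [lra|lia]).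
      lra.
Qed.

Section Meet.

Variables (q : Econd) (stq xH : list nat) (J Lm : nat) (F : nat -> nat -> Econd).

Definition meet_tree : Tree := fun s =>
  (proj1_sig q s /\
   forall j l, (j < J)%nat -> (l < Lm)%nat -> proj1_sig (F j l) xH -> proj1_sig (F j l) s) /\
  (prefix s xH \/ prefix xH s).

Lemma meet_tree_missing_pointwise s x :
  proj1_sig q s -> prefix xH s ->
  indR (~ meet_tree (s ++ [x])) <= indR (~ proj1_sig q (s ++ [x])) +
    sum_range (fun j => sum_range (fun l => indR (proj1_sig (F j l) xH) *
      indR (~ proj1_sig (F j l) (s ++ [x]))) 0 Lm) 0 J.
Proof.
  intros Hqs Hxs.
  pose (term := fun j l => indR (proj1_sig (F j l) xH) * indR (~ proj1_sig (F j l) (s ++ [x]))).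
  change (indR (~ meet_tree (s ++ [x])) <= indR (~ proj1_sig q (s ++ [x])) +
    sum_range (fun j => sum_range (term j) 0 Lm) 0 J).
  assert (Hterm : forall j l, 0 <= term j l).
  { intros j l. pose proof (indR_01 (proj1_sig (F j l) xH)).
    pose proof (indR_01 (~ proj1_sig (F j l) (s ++ [x]))). unfold term. nra. }
  assert (Hnn : 0 <= sum_range (fun j => sum_range (term j) 0 Lm) 0 J)
    by (apply sum_range_nonneg; intros; apply sum_range_nonneg; intros; apply Hterm).
  pose proof (indR_01 (~ proj1_sig q (s ++ [x]))).
  destruct (excluded_middle_informative (meet_tree (s ++ [x]))) as [HT|HT];
    [rewrite (indR_0 (~ meet_tree (s ++ [x])) (fun H => H HT)); lra|].
  rewrite (indR_1 (~ meet_tree (s ++ [x])) HT).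
  destruct (excluded_middle_informative (proj1_sig q (s ++ [x]))) as [Hq|Hq];
    [|rewrite (indR_1 (~ proj1_sig q (s ++ [x])) Hq); lra].
  assert (exists j l, (j < J)%nat /\ (l < Lm)%nat /\ proj1_sig (F j l) xH /\
                      ~ proj1_sig (F j l) (s ++ [x])) as [j [l [Hj [Hl [H1 H2]]]]].
  { apply NNPP. intro Hn. apply HT. split; [split; auto|].
    - intros j l Hj Hl H1. apply NNPP. intro H2. apply Hn. exists j, l. auto.
    - right. apply (prefix_trans _ s); auto. apply prefix_app. }
  assert (1 <= sum_range (fun j => sum_range (term j) 0 Lm) 0 J).
  { eapply Rle_trans; [|apply (sum_range_ge_term _ 0 J j)];
      [| intros; apply sum_range_nonneg; intros; apply Hterm | lia].
    eapply Rle_trans; [|apply (sum_range_ge_term _ 0 Lm l)]; [| intros; apply Hterm | lia].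
    unfold term. rewrite (indR_1 _ H1), (indR_1 (~ proj1_sig (F j l) (s ++ [x])) H2). lra. }
  lra.
Qed.

Variables (hs K : nat) (ms : nat -> nat).
Hypotheses (Hstq : (1 <= length stq)%nat)
  (Hq : missing_bounded (proj1_sig q) stq (1 / INR (length stq)))
  (HxH : proj1_sig q xH) (Hpre : prefix stq xH)
  (Hloss : forall j l, (j < J)%nat -> loss_ok (proj1_sig (F j l)) hs (ms j))
  (Hhs : (hs <= length xH)%nat) (HK1 : (length stq <= K)%nat)
  (HK2 : forall j, (j < J)%nat -> (ms j <= K)%nat)
  (HH : (2 * K * (J * Lm + 1) <= length xH)%nat).

(* Above [xH] each of the [J * Lm + 1] trees misses at most [cap h (1/K)] successors,
   which [cap_absorbs_count] absorbs into [cap h (1/|xH|)]. *)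
Lemma meet_tree_missing_bounded : missing_bounded meet_tree xH (1 / INR (length xH)).
Proof.
  intros s [[Hqs HFs] _] Hxs.
  assert (HK : (1 <= K)%nat) by lia.
  set (RK := cap (length s) (1 / INR K)).
  rewrite INR_missing.
  eapply Rle_trans; [apply sum_range_le; intros x _; apply meet_tree_missing_pointwise; auto|].
  rewrite sum_range_plus, <- INR_missing, sum_range_exchange.
  rewrite (sum_range_ext _ (fun j => sum_range (fun l => indR (proj1_sig (F j l) xH) *
      sum_range (fun x => indR (~ proj1_sig (F j l) (s ++ [x]))) 0 (MT (length s))) 0 Lm)).
  2:{ intros j _. rewrite sum_range_exchange.
      apply sum_range_ext. intros l _. rewrite sum_range_scal. auto. }
  assert (Hq1 : INR (missing (proj1_sig q) s) <= RK).
  { eapply Rle_trans; [apply Hq; auto; apply (prefix_trans _ xH); auto|].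
    apply cap_le, inv_INR_le; auto. }
  assert (Hq2 : sum_range (fun j => sum_range (fun l => indR (proj1_sig (F j l) xH) *
      sum_range (fun x => indR (~ proj1_sig (F j l) (s ++ [x]))) 0 (MT (length s))) 0 Lm) 0 J
                <= INR J * (INR Lm * RK)).
  { apply sum_range_bound. intros j Hj. apply sum_range_bound. intros l Hl.
    destruct (excluded_middle_informative (proj1_sig (F j l) xH)) as [Hx|Hx].
    - rewrite indR_1, Rmult_1_l, <- INR_missing by auto.
      destruct (Hloss j l ltac:(lia)) as [Hm [_ Hn]].
      eapply Rle_trans; [apply mu_ge_iff, Hn; [apply HFs; auto; lia|]|].
      + apply prefix_length in Hxs. lia.
      + apply cap_le, inv_INR_le; [lia|]. apply HK2. lia.
    - rewrite indR_0, Rmult_0_l by auto. left. apply cap_pos. }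
  assert (Hfin : (INR (J * Lm) + 1) * RK <= cap (length s) (1 / INR (length xH)))
    by (apply cap_absorbs_count; auto; apply prefix_length; auto).
  rewrite mult_INR in Hfin. lra.
Qed.

Lemma meet_tree_inE : inE meet_tree.
Proof.
  assert (HxH1 : (1 <= length xH)%nat) by nia.
  apply (inE_of_missing_bounded _ xH); auto.
  - split; [|split].
    + split; [split|left; apply prefix_nil].
      * apply (econd_prefix _ _ xH); auto. apply prefix_nil.
      * intros j l Hj Hl Hf. apply (econd_prefix _ _ xH); auto. apply prefix_nil.
    + intros s [[Hs _] _]. apply (econd_subtree q), Hs.
    + intros a b [[Hqa HFa] Hc]. split; [split|].
      * apply (econd_prefix _ _ (a ++ b)); auto. apply prefix_app.
      * intros j l Hj Hl Hf. apply (econd_prefix _ _ (a ++ b)); auto. apply prefix_app.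
      * destruct Hc as [Hc|Hc].
        -- left. apply (prefix_trans _ (a ++ b)); auto. apply prefix_app.
        -- apply (prefix_comparable a xH (a ++ b)); auto. apply prefix_app.
  - split; [split; auto|left; apply prefix_refl].
  - intros t [_ Ht]; auto.
  - apply meet_tree_missing_bounded.
Qed.

Lemma meet_condition : exists q' : Econd, Ele q' q /\
  forall j l, (j < J)%nat -> (l < Lm)%nat -> proj1_sig (F j l) xH -> Ele q' (F j l).
Proof.
  exists (exist _ meet_tree meet_tree_inE). split.
  - intros s [[Hs _] _]. auto.
  - intros j l Hj Hl Hx s [[_ HF] _]. apply HF; auto.
Qed.

End Meet.

(** * The greedy walk *)

Lemma exists_small_term (P : nat -> Prop) (D : nat -> R) (M : nat) (c a : R) :
  4 <= a -> 0 <= c -> (forall l, 0 <= D l) -> sum_range D 0 M <= c * a ->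
  a * a - a <= INR (countP P 0 M) -> exists l, (l < M)%nat /\ P l /\ D l <= 4 * c / a.
Proof.
  intros Ha Hc HD Hsum Hcnt. apply NNPP. intro Hn.
  destruct (Req_dec c 0) as [Hc0|Hc0].
  - destruct (countP_pos P 0 M) as [l [Hl HPl]].
    { apply INR_le. simpl. nra. }
    apply Hn. exists l. split; [lia|]. split; auto.
    pose proof (sum_range_ge_term D 0 M l (fun i _ => HD i) Hl). subst c.
    unfold Rdiv. lra.
  - assert (Hm : INR (countP P 0 M) * (4 * c / a) <= sum_range D 0 M).
    { apply countP_markov; auto. intros l Hl HPl.
      destruct (Rle_or_lt (D l) (4 * c / a)) as [H|H]; [|lra].
      exfalso. apply Hn. exists l. split; [lia|]. auto. }
    assert (Hpos : 0 <= 4 * c / a) by (unfold Rdiv; apply Rmult_le_pos; [lra|];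
      left; apply Rinv_0_lt_compat; lra).
    assert ((a * a - a) * (4 * c / a) <= INR (countP P 0 M) * (4 * c / a))
      by (apply Rmult_le_compat_r; auto).
    replace ((a * a - a) * (4 * c / a)) with (4 * c * (a - 1)) in H by (field; lra).
    nra.
Qed.

Section GreedyWalk.

Variable start : nat -> nat.
Hypothesis Hstart : interval_partition start.
Variables (qs : nat -> nat -> Econd) (J : nat) (u : list nat).
Hypothesis Hu : u <> [].

Definition avg_density (j : nat) (x : list nat) : R :=
  1 / INR (length u) * sumR (map (fun k => density start (qs j) k x) u).

Definition total_avg_density (x : list nat) : R :=
  sum_range (fun j => avg_density j x) 0 J.

Lemma INR_length_pos : 0 < INR (length u).
Proof. destruct u; [congruence|]. simpl length. apply lt_0_INR. lia. Qed.

Lemma avg_density_antitone j x y : prefix x y -> avg_density j y <= avg_density j x.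
Proof.
  intros Hp. unfold avg_density. apply Rmult_le_compat_l.
  - pose proof INR_length_pos. unfold Rdiv. rewrite Rmult_1_l. left. apply Rinv_0_lt_compat. lra.
  - apply sumR_map_le. intros. apply density_antitone; auto.
Qed.

Lemma total_avg_density_drop_ge j x y : (j < J)%nat -> prefix x y ->
  avg_density j x - avg_density j y <= total_avg_density x - total_avg_density y.
Proof.
  intros Hj Hp. unfold total_avg_density. rewrite <- sum_range_minus.
  apply (sum_range_ge_term (fun i => avg_density i x - avg_density i y) 0 J j); [|lia].
  intros i _. pose proof (avg_density_antitone i x y Hp). lra.
Qed.

Variables (ms : nat -> nat) (hs : nat).
Hypothesis Hloss : forall j l, (j < J)%nat -> loss_ok (proj1_sig (qs j l)) hs (ms j).

Lemma total_avg_density_drop_sum x : (hs <= length x)%nat ->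
  sum_range (fun l => total_avg_density x - total_avg_density (x ++ [l])) 0 (MT (length x))
    <= INR J * INR (aT (length x)).
Proof.
  intro Hhs. unfold total_avg_density.
  rewrite (sum_range_ext _ (fun l => sum_range (fun j => avg_density j x - avg_density j (x ++ [l])) 0 J))
    by (intros; rewrite sum_range_minus; auto).
  rewrite (sum_range_exchange (fun l j => avg_density j x - avg_density j (x ++ [l]))).
  apply sum_range_bound. intros j Hj.
  rewrite (sum_range_ext _ (fun l => 1 / INR (length u) *
      sumR (map (fun k => density start (qs j) k x - density start (qs j) k (x ++ [l])) u)))
    by (intros; unfold avg_density; rewrite sumR_map_minus; ring).
  rewrite sum_range_scal, <- (sumR_map_sum_range (fun k l =>
      density start (qs j) k x - density start (qs j) k (x ++ [l]))).
  pose proof INR_length_pos.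
  apply (Rle_trans _ (1 / INR (length u) * sumR (map (fun _ => INR (aT (length x))) u))).
  - apply Rmult_le_compat_l; [unfold Rdiv; rewrite Rmult_1_l; left; apply Rinv_0_lt_compat; lra|].
    apply sumR_map_le. intros k _.
    destruct (Hloss j 0%nat ltac:(lia)) as [Hm _].
    eapply Rle_trans; [apply (density_drop_sum start Hstart (qs j) k x hs (ms j)); auto;
                       intro l; apply Hloss; lia|].
    apply cap_le_aT, inv_INR_nonneg.
  - rewrite sumR_map_const. right. field. lra.
Qed.

Variables (q : Econd) (stq : list nat).
Hypothesis Hq : missing_bounded (proj1_sig q) stq (1 / INR (length stq)).

(* All but [a] of the [a^2] successors of [x] lie in [q], while the drops over all
   successors sum to at most [J a]; so some successor in [q] drops by at most
   [4J/a <= J/2^h]. *)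
Lemma greedy_step x :
  proj1_sig q x -> prefix stq x -> (hs <= length x)%nat ->
  exists y, proj1_sig q y /\ prefix x y /\ length y = S (length x) /\
    total_avg_density x - total_avg_density y <= INR J / 2 ^ (length x).
Proof.
  intros Hx Hstx Hhs.
  set (h := length x) in *. set (a := INR (aT h)). set (M := MT h).
  assert (Ha : 4 <= a) by apply INR_aT_ge4.
  assert (Hns : a * a - a <= INR (nsucc (proj1_sig q) x)).
  { assert (Hm : INR (missing (proj1_sig q) x) <= a)
      by (eapply Rle_trans; [apply Hq; auto|apply cap_le_aT, inv_INR_nonneg]).
    pose proof (countP_le (fun l => proj1_sig q (x ++ [l])) 0 M).
    rewrite minus_INR in Hm by auto. rewrite INR_MT in Hm. fold h a in Hm. lra. }
  destruct (exists_small_term (fun l => proj1_sig q (x ++ [l]))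
              (fun l => total_avg_density x - total_avg_density (x ++ [l])) M (INR J) a)
    as [l [Hl1 [Hl2 Hl3]]]; auto using pos_INR, total_avg_density_drop_sum.
  { intro l. unfold total_avg_density. rewrite <- sum_range_minus. apply sum_range_nonneg.
    intros j _. pose proof (avg_density_antitone j x (x ++ [l]) (prefix_app x [l])). lra. }
  exists (x ++ [l]). split; auto. split; [apply prefix_app|]. split; [rewrite length_app; simpl; lia|].
  eapply Rle_trans; [apply Hl3|].
  pose proof (INR_aT_ge_pow2 h). fold a in H.
  assert (0 < 2 ^ h) by (apply pow_lt; lra).
  replace (2 ^ (h + 2)) with (4 * 2 ^ h) in H by (rewrite pow_add; simpl; ring).
  replace (4 * INR J / a) with (INR J * (4 / a)) by (field; lra).
  replace (INR J / 2 ^ h) with (INR J * (4 / (4 * 2 ^ h))) by (field; lra).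
  apply Rmult_le_compat_l; [apply pos_INR|].
  unfold Rdiv. apply Rmult_le_compat_l; [lra|]. apply Rinv_le_contravar; lra.
Qed.

Lemma greedy_walk x0 :
  proj1_sig q x0 -> prefix stq x0 -> (hs <= length x0)%nat ->
  forall n, exists y, proj1_sig q y /\ prefix x0 y /\ length y = (length x0 + n)%nat /\
    total_avg_density x0 - total_avg_density y
      <= 2 * INR J * (1 / 2 ^ (length x0) - 1 / 2 ^ (length y)).
Proof.
  intros Hx0 Hst0 Hhs n. induction n.
  - exists x0. split; auto. split; [apply prefix_refl|]. split; [lia|]. lra.
  - destruct IHn as [y [Hy1 [Hy2 [Hy3 Hy4]]]].
    destruct (greedy_step y Hy1) as [z [Hz1 [Hz2 [Hz3 Hz4]]]].
    + apply (prefix_trans _ x0); auto.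
    + apply prefix_length in Hy2. lia.
    + exists z. split; auto. split; [apply (prefix_trans _ y); auto|]. split; [lia|].
      rewrite Hz3. simpl pow.
      assert (0 < 2 ^ length y) by (apply pow_lt; lra).
      assert (INR J / 2 ^ length y = 2 * INR J * (1 / 2 ^ length y - 1 / (2 * 2 ^ length y)))
        by (field; lra).
      lra.
Qed.

End GreedyWalk.

(** * Strong FAM limits *)

Lemma slack_loss_bounds (m hs h : nat) : (2 <= m)%nat -> (3 * m < hs)%nat -> (hs <= h)%nat ->
  0 <= slack hs h <= 1 /\ 2 * slack hs h <= 1 / INR m.
Proof.
  intros Hm Hs Hh.
  pose proof (slack_bounds hs h ltac:(lia)) as [H0 H1].
  assert (Hhs : 3 * INR m + 1 <= INR hs).
  { replace 3 with (INR 3) by (simpl; ring). rewrite <- mult_INR, <- S_INR. apply le_INR. lia. }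
  assert (Hm' : 2 <= INR m) by (apply (le_INR 2); lia).
  assert (1 / (2 * (INR hs - 1)) <= 1 / (2 * (3 * INR m)))
    by (unfold Rdiv; rewrite !Rmult_1_l; apply Rinv_le_contravar; lra).
  assert (1 / (2 * (3 * INR m)) <= 1 / 12)
    by (unfold Rdiv; rewrite !Rmult_1_l; apply Rinv_le_contravar; lra).
  assert (2 * (1 / (2 * (3 * INR m))) <= 1 / INR m).
  { replace (2 * (1 / (2 * (3 * INR m)))) with (1 / (3 * INR m)) by (field; lra).
    unfold Rdiv. rewrite !Rmult_1_l. apply Rinv_le_contravar; lra. }
  lra.
Qed.

Lemma walk_drop_small (J n n' : nat) (eps : R) : 0 < eps -> 4 * INR J / eps <= 2 ^ n ->
  2 * INR J * (1 / 2 ^ n - 1 / 2 ^ n') <= eps / 2.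
Proof.
  intros He Hn.
  assert (Hp : 0 < 2 ^ n) by (apply pow_lt; lra).
  assert (0 < 1 / 2 ^ n') by (unfold Rdiv; rewrite Rmult_1_l; apply Rinv_0_lt_compat, pow_lt; lra).
  assert (HJ := pos_INR J).
  assert (4 * INR J <= eps * 2 ^ n).
  { apply (Rmult_le_compat_r eps) in Hn; [|lra].
    replace (4 * INR J / eps * eps) with (4 * INR J) in Hn by (field; lra). nra. }
  assert (2 * INR J * (1 / 2 ^ n) <= eps / 2).
  { apply (Rmult_le_reg_r (2 ^ n)); [lra|].
    replace (2 * INR J * (1 / 2 ^ n) * 2 ^ n) with (2 * INR J) by (field; lra). lra. }
  nra.
Qed.

(* The measure [Xi(G) >= 1 - eta] of the dense set, approximated within [eps/2] by the
   sample, keeps the average density [>= (1-eta)(1-eta-eps/2)]; the walk costs another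
   [eps/2], and [2 eta <= l]. *)
Lemma density_lower_bound (eta l eps frac XiG Aold Anew target : R) :
  0 < eps -> 0 <= eta <= 1 -> 2 * eta <= l -> 1 - eta <= XiG -> XiG - eps / 2 < frac ->
  (1 - eta) * frac <= Aold -> Aold - Anew <= eps / 2 -> Anew <= target ->
  target >= 1 - l - eps.
Proof.
  intros Heps Heta Hl HG Hf HA Hw Ht.
  assert ((1 - eta) * (1 - eta - eps / 2) <= (1 - eta) * frac)
    by (apply Rmult_le_compat_l; lra).
  assert (0 <= eta * eta) by nra. assert (0 <= eta * eps) by nra.
  apply Rle_ge. nra.
Qed.

Lemma inv_INR_inj (m1 m2 : nat) : (1 <= m1)%nat -> (1 <= m2)%nat ->
  1 / INR m1 = 1 / INR m2 -> m1 = m2.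
Proof.
  intros H1 H2 E. apply INR_eq.
  assert (0 < INR m1) by (apply lt_0_INR; lia). assert (0 < INR m2) by (apply lt_0_INR; lia).
  unfold Rdiv in E. rewrite !Rmult_1_l in E.
  rewrite <- (Rinv_inv (INR m1)), <- (Rinv_inv (INR m2)), E. auto.
Qed.

Lemma loss_is_loss_ok (q : Econd) s l : stem_is q s -> loss_is q l ->
  exists m, loss_ok (proj1_sig q) (length s) m /\ l = 1 / INR m.
Proof.
  intros Hs [st [Hst [m [Hm [_ Hl]]]]].
  rewrite (stem_len_unique (proj1_sig q) s st); auto. exists m. auto.
Qed.

Lemma sequence_uniform (qs : nat -> Econd) s lstar :
  (forall l, stem_is (qs l) s /\ loss_is (qs l) lstar) ->
  exists m, uniform_seq qs s m /\ lstar = 1 / INR m.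
Proof.
  intro Hqs. destruct (Hqs 0%nat) as [Hs0 Hl0].
  destruct (loss_is_loss_ok _ _ _ Hs0 Hl0) as [m0 [Hm0 Hlm0]].
  exists m0. split; auto. intro l. destruct (Hqs l) as [Hsl Hll]. split; auto.
  destruct (loss_is_loss_ok _ _ _ Hsl Hll) as [ml [Hml Hlml]].
  replace m0 with ml; auto.
  apply inv_INR_inj; [destruct Hml; lia|destruct Hm0; lia|congruence].
Qed.

Lemma good_below_lim start Xi qs s m (q : Econd) t :
  interval_partition start -> FAM Xi -> uniform_seq qs s m ->
  Ele q (lim_E start Xi qs) -> proj1_sig q t -> (length s <= length t)%nat ->
  good start Xi qs (length s) t.
Proof.
  intros Hstart HXi Hs Hq Ht Hlen.
  destruct (lim_E_limtree start Hstart Xi HXi qs s m Hs) as [s' [m' [Hs' [Hl HE]]]].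
  pose proof (Hq t Ht) as Htl. rewrite HE in Htl.
  assert (Hpre : prefix s' t).
  { destruct Htl as [H|[H _]]; auto.
    rewrite (prefix_antisym_len _ _ H); [apply prefix_refl|lia]. }
  rewrite <- Hl. apply (limtree_above start Hstart Xi HXi qs s' m' Hs' t Htl Hpre); auto.
  apply prefix_refl.
Qed.

Lemma nat_choice (J : nat) (T : Type) (d : T) (P : nat -> T -> Prop) :
  (forall j, (j < J)%nat -> exists x, P j x) ->
  exists f : nat -> T, forall j, (j < J)%nat -> P j (f j).
Proof.
  intro H.
  assert (H' : forall j, exists x, (j < J)%nat -> P j x).
  { intro j. destruct (le_lt_dec J j); [exists d; intro; lia|].
    destruct (H j l) as [x Hx]. exists x; auto. }
  exists (fun j => proj1_sig (constructive_indefinite_description _ (H' j))).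
  intros j Hj. exact (proj2_sig (constructive_indefinite_description _ (H' j)) Hj).
Qed.

Lemma le_fold_max (u : list nat) k : In k u -> (k <= fold_right max 0%nat u)%nat.
Proof. induction u; simpl; intros H; [contradiction|]. destruct H; subst; [lia|]. apply IHu in H. lia. Qed.

Lemma avg_density_ge_dense start qs u j hs t :
  u <> [] -> interval_partition start -> 0 <= slack hs (length t) <= 1 ->
  (1 - slack hs (length t)) *
    (INR (length (filter (dense_set start (qs j) hs t) u)) / INR (length u))
  <= avg_density start qs u j t.
Proof.
  intros Hu Hstart Hsl. unfold avg_density.
  pose proof (INR_length_pos u Hu).
  assert (INR (length (filter (dense_set start (qs j) hs t) u)) * (1 - slack hs (length t))
          <= sumR (map (fun k => density start (qs j) k t) u)).
  { apply sumR_map_ge_filter; [lra| |].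
    - intros k _. apply density_range; auto.
    - intros k _ Hk. apply pdec_true_inv in Hk. auto. }
  apply (Rmult_le_reg_l (INR (length u))); [lra|].
  replace (INR (length u) * (1 / INR (length u) * sumR (map (fun k => density start (qs j) k t) u)))
    with (sumR (map (fun k => density start (qs j) k t) u)) by (field; lra).
  replace (INR (length u) * ((1 - slack hs (length t)) *
     (INR (length (filter (dense_set start (qs j) hs t) u)) / INR (length u))))
    with (INR (length (filter (dense_set start (qs j) hs t) u)) * (1 - slack hs (length t)))
    by (field; lra).
  auto.
Qed.

Lemma avg_density_le_Ele start qs u j x (q' : Econd) Lm :
  u <> [] -> interval_partition start ->
  (forall k, In k u -> (start (S k) <= Lm)%nat) ->
  (forall l, (l < Lm)%nat -> proj1_sig (qs j l) x -> Ele q' (qs j l)) ->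
  avg_density start qs u j x <= 1 / INR (length u) *
    sumR (map (fun k => INR (countP (fun l => Ele q' (qs j l)) (start k) (Ilen start k))
                        / INR (Ilen start k)) u).
Proof.
  intros Hu Hstart HLm Hq'. unfold avg_density.
  pose proof (INR_length_pos u Hu).
  apply Rmult_le_compat_l; [unfold Rdiv; rewrite Rmult_1_l; left; apply Rinv_0_lt_compat; lra|].
  apply sumR_map_le. intros k Hk. unfold density, Rdiv.
  apply Rmult_le_compat_r; [left; apply Rinv_0_lt_compat, Ilen_pos; auto|].
  apply le_INR, countP_mono. intros l Hl Hlx. apply Hq'; auto.
  pose proof (start_add_Ilen start Hstart k). pose proof (HLm k Hk). lia.
Qed.

Lemma sample_density_bound start Xi qs jstar u j t xH (q' : Econd) Lm hs m lstar eps he :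
  interval_partition start -> u <> [] -> (j < jstar)%nat -> 0 < eps ->
  (2 <= m)%nat -> (3 * m < hs)%nat -> (hs <= length t)%nat -> lstar = 1 / INR m ->
  good start Xi (qs j) hs t ->
  Xi (dense_set start (qs j) hs t) - eps / 2
    < INR (length (filter (dense_set start (qs j) hs t) u)) / INR (length u) ->
  prefix t xH ->
  total_avg_density start qs jstar u t - total_avg_density start qs jstar u xH
    <= 2 * INR jstar * (1 / 2 ^ length t - 1 / 2 ^ length xH) ->
  4 * INR jstar / eps <= 2 ^ he -> (he <= length t)%nat ->
  (forall k, In k u -> (start (S k) <= Lm)%nat) ->
  (forall l, (l < Lm)%nat -> proj1_sig (qs j l) xH -> Ele q' (qs j l)) ->
  1 / INR (length u) *
    sumR (map (fun k => INR (countP (fun l => Ele q' (qs j l)) (start k) (Ilen start k))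
                        / INR (Ilen start k)) u)
  >= 1 - lstar - eps.
Proof.
  intros Hstart Hu Hj Heps Hm2 Hm3 Hlen Hl Hgood Hg Hpre Hwalk Hhe Hhet HLm Hq'.
  destruct (slack_loss_bounds m hs (length t) Hm2 Hm3 Hlen) as [Hsl1 Hsl2].
  apply (density_lower_bound (slack hs (length t)) lstar eps
    (INR (length (filter (dense_set start (qs j) hs t) u)) / INR (length u))
    (Xi (dense_set start (qs j) hs t))
    (avg_density start qs u j t) (avg_density start qs u j xH)); auto.
  - rewrite Hl. auto.
  - apply avg_density_ge_dense; auto.
  - eapply Rle_trans; [apply (total_avg_density_drop_ge start Hstart qs jstar); auto|].
    eapply Rle_trans; [apply Hwalk|]. apply walk_drop_small; auto.
    apply (Rle_trans _ _ _ Hhe), Rle_pow; [lra|lia].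
  - apply (avg_density_le_Ele start qs u j xH q' Lm); auto.
Qed.

Lemma sequences_uniform (qs : nat -> nat -> Econd) jstar sstar lstar :
  (forall j l, (j < jstar)%nat -> stem_is (qs j l) sstar /\ loss_is (qs j l) lstar) ->
  exists ms : nat -> nat, forall j, (j < jstar)%nat ->
    uniform_seq (qs j) sstar (ms j) /\ lstar = 1 / INR (ms j).
Proof.
  intro Hqs. apply (nat_choice jstar nat 0%nat (fun j m => uniform_seq (qs j) sstar m /\ lstar = 1 / INR m)).
  intros j Hj. apply sequence_uniform.
  intro l. apply Hqs, Hj.
Qed.

Theorem lemma1 :
  forall (start : nat -> nat), interval_partition start ->
  forall Xi : (nat -> bool) -> R, FAM Xi ->
  exists lim : (nat -> Econd) -> Econd, strong_FAM_limit start Xi lim.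
Proof.
  intros start Hstart Xi HXi. exists (lim_E start Xi).
  intros sstar lstar jstar qs Hqs eps kstar B mstar Heps HB q Hq.
  set (hs := length sstar).
  destruct (sequences_uniform qs jstar sstar lstar Hqs) as [ms Hms].
  assert (Hloss : forall j l, (j < jstar)%nat -> loss_ok (proj1_sig (qs j l)) hs (ms j))
    by (intros j l Hj; apply (proj1 (Hms j Hj))).
  destruct (econd_missing_bounded q) as [stq [Hstq [Hstq1 Hqn]]].
  destruct (exists_pow2_ge (4 * INR jstar / eps)) as [he Hhe].
  destruct (missing_bounded_climb q stq (1 / INR (length stq)) (proj1 Hstq)
      (inv_INR_nonneg _) Hqn (hs + he)) as [t [Ht [Hstt Hlt]]].
  set (G := fun j => dense_set start (qs j) hs t).
  destruct (Xi_finite_approx Xi HXi (map B (seq 0 mstar) ++ map G (seq 0 jstar)) (eps / 2) kstar)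
    as [u [Hu1 [Hu2 [Hu3 Hu4]]]]; [lra|].
  set (K := (length stq + hs)%nat).
  set (Lm := start (S (fold_right max 0%nat u))).
  destruct (greedy_walk start Hstart qs jstar u Hu1 ms hs Hloss q stq Hqn t Ht Hstt
      ltac:(lia) (2 * K * (jstar * Lm + 1))) as [xH [HxH1 [HxH2 [HxH3 HxH4]]]].
  destruct (meet_condition q stq xH jstar Lm qs hs K ms Hstq1 Hqn HxH1) as [q' [Hq'1 Hq'2]];
    [apply (prefix_trans _ t); auto | auto | apply prefix_length in HxH2; lia | unfold K; lia
    | intros j Hj; destruct (Hloss j 0%nat Hj) as [_ [H _]]; unfold K; lia | lia |].
  exists u, q'. do 4 (split; auto). split.
  - intros m Hm. destruct (Hu4 (B m)); [|lra].
    apply in_or_app. left. apply in_map, in_seq. lia.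
  - intros j Hj. destruct (Hms j Hj) as [Hunif Hl]. destruct (Hloss j 0%nat Hj) as [Hm2 [Hm3 _]].
    destruct (Hu4 (G j)) as [Hg _]; [apply in_or_app; right; apply in_map, in_seq; lia|].
    apply (sample_density_bound start Xi qs jstar u j t xH q' Lm hs (ms j) lstar eps he); auto;
      try lia.
    + apply (good_below_lim start Xi (qs j) sstar (ms j) q t); auto. unfold hs. lia.
    + intros k Hk. apply start_mono; auto. apply le_n_S, le_fold_max, Hk.
Qed.
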